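(* Let $\mathcal M=(M,<,+,0,\ldots)$ be a definably complete locally o-minimal expansion of an ordered group. Let $(G,d_G)$ be a definable metric group which is definably compact, and $(X,d_X)$ a definable metric space. Suppose $G$ acts on $X$ by a definable continuous left action. Then the definable quotient space $(Q,\tau_Q)$ of $X$ by $G$ is a definable metric space, i.e. there is a definable distance function $d_Q$ on $Q$ whose induced topology is $\tau_Q$.
   Context: ''Definable'' means definable in $\mathcal M$ with parameters. $\mathcal M$ is an expansion of an ordered group with dense order without endpoints; locally o-minimal: for every definable $Y\subseteq M$ and $a\in M$ there is an open interval $I\ni a$ with $Y\cap I$ a finite union of points and open intervals; definably complete: every definable subset of $M$ has sup and inf in $M\cup\{\pm\infty\}$. A definable metric space $(X,d_X)$ is a definable set $X$ with a definable function $d_X:X\times X\to\{a\in M: a\ge 0\}$ satisfying $d_X(x,y)=0\iff x=y$, symmetry and the triangle inequality; it carries the topology with open base the balls $\{y: d_X(x,y)<\varepsilon\}$. A definable metric group is a definable metric space $(G,d_G)$ whose underlying set is a definable group such that multiplication and inversion are continuous in the induced topology. A definable topological space (definable set with a topology having a definable family as open base) is definably compact if every definable filtered family (for any two members some member lies in their intersection) of nonempty closed subsets has nonempty intersection. The definable quotient of $X$ by $G$ is a definable topological space $(Q,\tau_Q)$ with a definable continuous $\pi:X\to Q$ such that every definable continuous map from $X$ to a definable topological space that is constant on $G$-orbits factors as $\psi\circ\pi$ with $\psi$ definable continuous; it exists and is unique up to definable homeomorphism (concretely $Q$ can be a definable set meeting each orbit in one point, with $S\subseteq Q$ open iff $\pi^{-1}(S)$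 open). *)

(* Tuples in M^n are represented as lists of length n;
   subsets of M^n as predicates on lists. *)
From Stdlib Require Import List.
Import ListNotations.
Set Implicit Arguments.

Record ogroup (M : Type) := OGroup {
  ltM : M -> M -> Prop;
  addM : M -> M -> M;
  zeroM : M;
  oppM : M -> M }.

Section Defs.
Variables (M : Type) (O : ogroup M).
Local Notation lt := (ltM O).
Local Notation add := (addM O).
Local Notation z := (zeroM O).
Definition leM (x y : M) : Prop := lt x y \/ x = y.

Definition dense_ordered_group : Prop :=
  (forall x, ~ lt x x) /\
  (forall x y w, lt x y -> lt y w -> lt x w) /\
  (forall x y, lt x y \/ x = y \/ lt y x) /\
  (forall x y w, add x (add y w) = add (add x y) w) /\
  (forall x y, add x y = add y x) /\
  (forall x, add z x = x) /\
  (forall x, add (oppM O x) x = z) /\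
  (forall x y w, lt x y -> lt (add x w) (add y w)) /\
  (forall x y, lt x y -> exists w, lt x w /\ lt w y) /\
  (forall x, exists y w, lt y x /\ lt x w).

(* D n A : "A (a subset of M^n) is definable (with parameters)".  The axioms
   below say that D is the collection of definable sets of an expansion of
   (M,<,+,0) with all parameters from M (van den Dries' notion of a structure
   on M, containing all points, the order and the graph of +). *)
Definition is_structure (D : nat -> (list M -> Prop) -> Prop) : Prop :=
  (forall n A, D n A -> forall s, A s -> length s = n) /\
  (forall n A B, D n A -> (forall s, A s <-> B s) -> D n B) /\
  (forall n, D n (fun s => length s = n)) /\
  (forall n A B, D n A -> D n B -> D n (fun s => A s \/ B s)) /\
  (forall n A, D n A -> D n (fun s => length s = n /\ ~ A s)) /\
  (forall n A, D n A -> D (S n) (fun s => length s = S n /\ A (firstn n s))) /\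
  (forall n A, D n A -> D (S n) (fun s => length s = S n /\ A (tl s))) /\
  (forall n i j, i < n -> j < n ->
      D n (fun s => length s = n /\ nth i s z = nth j s z)) /\
  (forall n A, D (S n) A -> D n (fun s => exists x, A (s ++ [x]))) /\
  (forall a, D 1 (fun s => s = [a])) /\
  (D 2 (fun s => exists x y, s = [x; y] /\ lt x y)) /\
  (D 3 (fun s => exists x y, s = [x; y; add x y])).

Variable D : nat -> (list M -> Prop) -> Prop.

Definition locally_o_minimal : Prop :=
  forall Y, D 1 Y -> forall a, exists b c, lt b a /\ lt a c /\
    exists (ps : list M) (iv : list (M * M)), forall x,
      (lt b x /\ lt x c /\ Y [x]) <->
      (In x ps \/ exists p, In p iv /\ lt (fst p) x /\ lt x (snd p)).

Inductive ext := ENinf | EFin (x : M) | EPinf.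
Definition ele (u v : ext) : Prop :=
  match u, v with
  | ENinf, _ => True
  | _, EPinf => True
  | EFin x, EFin y => leM x y
  | _, _ => False
  end.
Definition is_sup (Y : list M -> Prop) (s : ext) : Prop :=
  (forall y, Y [y] -> ele (EFin y) s) /\
  (forall u, (forall y, Y [y] -> ele (EFin y) u) -> ele s u).
Definition is_inf (Y : list M -> Prop) (s : ext) : Prop :=
  (forall y, Y [y] -> ele s (EFin y)) /\
  (forall u, (forall y, Y [y] -> ele u (EFin y)) -> ele u s).

Definition definably_complete : Prop :=
  forall Y, D 1 Y -> (exists s, is_sup Y s) /\ (exists i, is_inf Y i).

Definition def_fun (n k : nat) (X : list M -> Prop) (f : list M -> list M) : Prop :=
  D (n + k) (fun s => X (firstn n s) /\ skipn n s = f (firstn n s)).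

Definition def_fun2 (n m k : nat) (X Y : list M -> Prop)
    (f : list M -> list M -> list M) : Prop :=
  D (n + m + k) (fun s => X (firstn n s) /\ Y (firstn m (skipn n s)) /\
      skipn (n + m) s = f (firstn n s) (firstn m (skipn n s))).

Definition is_metric (X : list M -> Prop) (d : list M -> list M -> M) : Prop :=
  forall x y w, X x -> X y -> X w ->
    leM z (d x y) /\ (d x y = z <-> x = y) /\ d x y = d y x /\
    leM (d x w) (add (d x y) (d y w)).

Definition definable_metric_space (n : nat) (X : list M -> Prop)
    (d : list M -> list M -> M) : Prop :=
  D n X /\ def_fun2 n n 1 X X (fun x y => [d x y]) /\ is_metric X d.

Definition mopen (X : list M -> Prop) (d : list M -> list M -> M)
    (S : list M -> Prop) : Prop :=
  (forall x, S x -> X x) /\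
  forall x, S x -> exists e, lt z e /\ forall y, X y -> lt (d x y) e -> S y.

(* definable topological space: Q in M^k with a definable family
   {B t : T t}, T in M^l, as open base *)
Definition def_top_space (k : nat) (Q : list M -> Prop) (l : nat)
    (T : list M -> Prop) (B : list M -> list M -> Prop) : Prop :=
  D k Q /\ D l T /\ D (l + k) (fun s => T (firstn l s) /\ B (firstn l s) (skipn l s)) /\
  (forall t q, T t -> B t q -> Q q) /\
  (forall q, Q q -> exists t, T t /\ B t q) /\
  (forall t1 t2 q, T t1 -> T t2 -> B t1 q -> B t2 q ->
     exists t3, T t3 /\ B t3 q /\ forall q', B t3 q' -> B t1 q' /\ B t2 q').

Definition topen (Q : list M -> Prop) (T : list M -> Prop)
    (B : list M -> list M -> Prop) (S : list M -> Prop) : Prop :=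
  (forall q, S q -> Q q) /\
  forall q, S q -> exists t, T t /\ B t q /\ forall q', B t q' -> S q'.

Definition cont_metric_top (X : list M -> Prop) (dX : list M -> list M -> M)
    (T : list M -> Prop) (B : list M -> list M -> Prop) (f : list M -> list M) : Prop :=
  forall x t, X x -> T t -> B t (f x) ->
    exists e, lt z e /\ forall y, X y -> lt (dX x y) e -> B t (f y).

Definition cont_top_top (Q : list M -> Prop) (TQ : list M -> Prop)
    (BQ : list M -> list M -> Prop) (T : list M -> Prop)
    (B : list M -> list M -> Prop) (f : list M -> list M) : Prop :=
  forall q t, Q q -> T t -> B t (f q) ->
    exists t', TQ t' /\ BQ t' q /\ forall q', BQ t' q' -> B t (f q').

Definition definable_metric_group (m : nat) (G : list M -> Prop)
    (dG : list M -> list M -> M) (mul : list M -> list M -> list M)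
    (inv : list M -> list M) (e : list M) : Prop :=
  definable_metric_space m G dG /\
  def_fun2 m m m G G mul /\ def_fun m m G inv /\
  G e /\
  (forall g h, G g -> G h -> G (mul g h)) /\
  (forall g, G g -> G (inv g)) /\
  (forall g h w, G g -> G h -> G w -> mul g (mul h w) = mul (mul g h) w) /\
  (forall g, G g -> mul e g = g /\ mul g e = g) /\
  (forall g, G g -> mul (inv g) g = e /\ mul g (inv g) = e) /\
  (forall g h eps, G g -> G h -> lt z eps -> exists del, lt z del /\
     forall g' h', G g' -> G h' -> lt (dG g g') del -> lt (dG h h') del ->
       lt (dG (mul g h) (mul g' h')) eps) /\
  (forall g eps, G g -> lt z eps -> exists del, lt z del /\
     forall g', G g' -> lt (dG g g') del -> lt (dG (inv g) (inv g')) eps).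

Definition definably_compact_metric (m : nat) (G : list M -> Prop)
    (dG : list M -> list M -> M) : Prop :=
  forall (l : nat) (T : list M -> Prop) (C : list M -> list M -> Prop),
    D l T ->
    D (l + m) (fun s => T (firstn l s) /\ C (firstn l s) (skipn l s)) ->
    (forall t g, T t -> C t g -> G g) ->
    (forall t, T t -> exists g, C t g) ->
    (forall t, T t -> forall g, G g -> ~ C t g ->
       exists eps, lt z eps /\ forall g', G g' -> lt (dG g g') eps -> ~ C t g') ->
    (forall t1 t2, T t1 -> T t2 ->
       exists t3, T t3 /\ forall g, C t3 g -> C t1 g /\ C t2 g) ->
    exists g, G g /\ forall t, T t -> C t g.

Definition definable_cont_action (m : nat) (G : list M -> Prop)
    (dG : list M -> list M -> M) (mul : list M -> list M -> list M) (e : list M)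
    (n : nat) (X : list M -> Prop) (dX : list M -> list M -> M)
    (act : list M -> list M -> list M) : Prop :=
  def_fun2 m n n G X act /\
  (forall g x, G g -> X x -> X (act g x)) /\
  (forall x, X x -> act e x = x) /\
  (forall g h x, G g -> G h -> X x -> act (mul g h) x = act g (act h x)) /\
  (forall g x eps, G g -> X x -> lt z eps -> exists del, lt z del /\
     forall g' x', G g' -> X x' -> lt (dG g g') del -> lt (dX x x') del ->
       lt (dX (act g x) (act g' x')) eps).

Definition is_definable_quotient (m : nat) (G : list M -> Prop)
    (n : nat) (X : list M -> Prop) (dX : list M -> list M -> M)
    (act : list M -> list M -> list M)
    (k : nat) (Q : list M -> Prop) (l : nat) (TQ : list M -> Prop)
    (BQ : list M -> list M -> Prop) (pi : list M -> list M) : Prop :=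
  def_top_space k Q l TQ BQ /\
  def_fun n k X pi /\
  (forall x, X x -> Q (pi x)) /\
  (forall q, Q q -> exists x, X x /\ pi x = q) /\
  (forall g x, G g -> X x -> pi (act g x) = pi x) /\
  cont_metric_top X dX TQ BQ pi /\
  (forall (k' : nat) (Y : list M -> Prop) (l' : nat) (T : list M -> Prop)
          (B : list M -> list M -> Prop) (f : list M -> list M),
     def_top_space k' Y l' T B ->
     def_fun n k' X f ->
     (forall x, X x -> Y (f x)) ->
     cont_metric_top X dX T B f ->
     (forall g x, G g -> X x -> f (act g x) = f x) ->
     exists psi : list M -> list M,
       def_fun k k' Q psi /\ (forall q, Q q -> Y (psi q)) /\
       cont_top_top Q TQ BQ T B psi /\
       (forall x, X x -> f x = psi (pi x))).

End Defs.

(* Fix [trunc > 0]. By definable completeness, dinv(x, y) = sup_g min(trunc, dX(g x, g y)) is a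
   definable G-invariant metric on X; definable compactness of G makes the action uniformly
   equicontinuous, so dinv is dX-continuous. The orbit pseudometric
   dorb(x, y) = inf_g dinv(x, g y) is G-invariant, and, again by compactness, vanishes only on
   pairs in a common orbit. The universal property of the quotient, applied to the continuous
   G-invariant map dorb(-, y) into M, shows that the fibres of pi are exactly the orbits, so
   dQ(pi x, pi y) = dorb(x, y) is a well-defined definable metric on Q. Continuity of pi makes
   every tau_Q-open set dQ-open; the universal property applied to pi itself, with the dQ-balls
   as target base, gives the converse. *)

From Stdlib Require Import List Lia Classical ClassicalEpsilon PeanoNat.
Import ListNotations.

Section QuotientMetric.
Variable M : Type.
Variable O : ogroup M.
Variable D : nat -> (list M -> Prop) -> Prop.
Hypothesis HD : is_structure O D.
Local Notation z := (zeroM O).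
Local Notation "a <' b" := (ltM O a b) (at level 70).
Local Notation "a <=' b" := (leM O a b) (at level 70).
Local Notation "a +' b" := (addM O a b) (at level 50, left associativity).
Local Notation "-' a" := (oppM O a) (at level 35).

Lemma D_length n A s : D n A -> A s -> length s = n.
Proof. intros hA hs. eapply HD; eauto. Qed.

Lemma D_ext n A B : D n A -> (forall s, A s <-> B s) -> D n B.
Proof. apply HD. Qed.

Definition definable n (P : list M -> Prop) := D n (fun s => length s = n /\ P s).

Lemma definable_of_D n A : D n A -> definable n A.
Proof.
  intro hA. eapply D_ext; [exact hA|]. intro s; split; [|tauto].
  intro a; split; [eapply D_length; eauto | exact a].
Qed.

Lemma D_of_definable n A : definable n A -> (forall s, A s -> length s = n) -> D n A.
Proof. intros hA hl. eapply D_ext; [exact hA|]. intro s; split; [tauto|]. intro a; split; auto. Qed.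

Lemma definable_ext n P P' : definable n P ->
  (forall s, length s = n -> (P s <-> P' s)) -> definable n P'.
Proof.
  intros hP e. eapply D_ext; [exact hP|]. intro s; split; intros [l p]; split; auto; apply e; auto.
Qed.

Lemma definable_True n : definable n (fun _ => True).
Proof. destruct HD as [_ [_ [h _]]]. eapply D_ext; [apply h|]. tauto. Qed.

Lemma definable_not n P : definable n P -> definable n (fun s => ~ P s).
Proof.
  intro h. destruct HD as [_ [_ [_ [_ [hc _]]]]]. eapply D_ext; [apply hc, h|]. cbv beta; tauto.
Qed.

Lemma definable_or n P P' : definable n P -> definable n P' -> definable n (fun s => P s \/ P' s).
Proof.
  intros h h'. destruct HD as [_ [_ [_ [hu _]]]]. eapply D_ext; [apply hu; [exact h | exact h']|].
  cbv beta; tauto.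
Qed.

Lemma definable_and n P P' : definable n P -> definable n P' -> definable n (fun s => P s /\ P' s).
Proof.
  intros h h'. eapply definable_ext.
  { apply definable_not, definable_or; [apply definable_not, h | apply definable_not, h']. }
  intros s _; split; [intro a; split; apply NNPP; tauto | tauto].
Qed.

Lemma definable_ex1 n P : definable (S n) P -> definable n (fun s => exists x, P (s ++ [x])).
Proof.
  intro h. destruct HD as [_ [_ [_ [_ [_ [_ [_ [_ [hp _]]]]]]]]].
  eapply D_ext; [apply hp, h|]. intro s; split.
  - intros [x [a b]]. rewrite length_app in a; simpl in a. split; [lia | eauto].
  - intros [a [x b]]. exists x; split; auto. rewrite length_app; simpl; lia.
Qed.

Lemma definable_ex n j P :
  definable (n + j) P -> definable n (fun s => exists y, length y = j /\ P (s ++ y)).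
Proof.
  revert n P; induction j as [|j IH]; intros n P h.
  - rewrite Nat.add_0_r in h. eapply definable_ext; [exact h|]. intros s _; split.
    + intro a; exists []; rewrite app_nil_r; auto.
    + intros [y [a b]]. destruct y; [|discriminate]. now rewrite app_nil_r in b.
  - replace (n + S j) with (S (n + j)) in h by lia. apply definable_ex1, IH in h.
    eapply definable_ext; [exact h|]. intros s _; split.
    + intros [y [a [x b]]]. exists (y ++ [x]).
      rewrite length_app, a, app_assoc; simpl; split; auto; lia.
    + intros [y [a b]]. destruct (@exists_last _ y) as [y' [x ->]].
      { destruct y; simpl in a; [lia | discriminate]. }
      exists y'. rewrite length_app in a; simpl in a. split; [lia|].
      exists x. now rewrite <- app_assoc.
Qed.

Lemma definable_skipn j n A : definable n A -> definable (j + n) (fun s => A (skipn j s)).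
Proof.
  induction j as [|j IH]; intro h; [exact h|].
  destruct HD as [_ [_ [_ [_ [_ [_ [ht _]]]]]]].
  eapply D_ext; [apply ht, IH, h|]. intro s; split.
  - intros [a [b c]]. split; auto. destruct s; simpl in *; [lia | auto].
  - intros [a b]. split; auto. destruct s; simpl in *; [lia | split; [lia | auto]].
Qed.

Lemma definable_firstn n j A : definable n A -> definable (n + j) (fun s => A (firstn n s)).
Proof.
  induction j as [|j IH]; intro h.
  - rewrite Nat.add_0_r. eapply definable_ext; [exact h|].
    intros s l; rewrite <- l, firstn_all; tauto.
  - destruct HD as [_ [_ [_ [_ [_ [hf _]]]]]].
    replace (n + S j) with (S (n + j)) by lia.
    eapply D_ext; [apply hf, IH, h|]. intro s; cbv beta. rewrite firstn_firstn.
    replace (Nat.min n (n + j)) with n by lia. split.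
    + intros [a [b c]]. split; auto.
    + intros [a b]. split; auto. rewrite length_firstn. split; [lia | auto].
Qed.

Lemma definable_block a j n A : definable j A -> a + j <= n ->
  definable n (fun s => A (firstn j (skipn a s))).
Proof.
  intros h l. apply (definable_skipn a), (definable_firstn _ (n - (a + j))) in h.
  replace (a + j + (n - (a + j))) with n in h by lia.
  eapply definable_ext; [exact h|]. intros s _; cbv beta.
  rewrite skipn_firstn_comm. now replace (a + j - a) with j by lia.
Qed.

Lemma definable_nth_eq n i j : i < n -> j < n -> definable n (fun s => nth i s z = nth j s z).
Proof. intros hi hj; destruct HD as [_ [_ [_ [_ [_ [_ [_ [h _]]]]]]]]. exact (h n i j hi hj). Qed.

Lemma firstn1_skipn (s : list M) i : i < length s -> firstn 1 (skipn i s) = [nth i s z].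
Proof.
  revert s; induction i; intros [|x s] l; simpl in *; try lia.
  - now destruct s.
  - apply IHi; lia.
Qed.

Lemma definable_nth_const n i a : i < n -> definable n (fun s => nth i s z = a).
Proof.
  intro l. destruct HD as [_ [_ [_ [_ [_ [_ [_ [_ [_ [hpt _]]]]]]]]]].
  eapply definable_ext; [apply (definable_block i 1 n); [apply definable_of_D, (hpt a) | lia]|].
  intros s ls; cbv beta. rewrite firstn1_skipn by lia.
  split; intro e; [now inversion e | now rewrite e].
Qed.

Lemma definable_forall_lt N j P : (forall i, i < j -> definable N (P i)) ->
  definable N (fun s => forall i, i < j -> P i s).
Proof.
  induction j as [|j IH]; intro h.
  - eapply definable_ext; [apply definable_True|]. intros; split; intros; auto; lia.
  - eapply definable_ext.
    { apply definable_and; [apply IH; intros; apply h; lia | apply (h j); lia]. }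
    intros s _; split.
    + intros [a b] i l. destruct (Nat.eq_dec i j); [subst; auto | apply a; lia].
    + intro a; split; auto.
Qed.

Lemma skipn_app_length (s y : list M) n : length s = n -> skipn n (s ++ y) = y.
Proof. intros <-. rewrite skipn_app, skipn_all, Nat.sub_diag. auto. Qed.

Lemma firstn_app_length (s y : list M) n : length s = n -> firstn n (s ++ y) = s.
Proof. intros <-. rewrite firstn_app, firstn_all, Nat.sub_diag, app_nil_r. auto. Qed.

Definition eval_slot (s : list M) (t : nat + M) : M :=
  match t with inl i => nth i s z | inr a => a end.

Lemma definable_subst n j A (tau : list (nat + M)) : definable j A -> length tau = j ->
  (forall i, In (inl i) tau -> i < n) -> definable n (fun s => A (map (eval_slot s) tau)).
Proof.
  intros hA hl hv.
  assert (hgraph : definable (n + j) (fun u => A (skipn n u) /\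
    forall i, i < j -> nth (n + i) u z = eval_slot u (nth i tau (inr z)))).
  { apply definable_and; [apply definable_skipn, hA|].
    apply definable_forall_lt. intros i li. destruct (nth i tau (inr z)) as [p|a] eqn:ei; simpl.
    - apply definable_nth_eq; [lia|].
      enough (p < n) by lia. apply hv. rewrite <- ei. apply nth_In. lia.
    - apply definable_nth_const. lia. }
  apply definable_ex in hgraph. eapply definable_ext; [exact hgraph|]. intros s ls.
  assert (slot_app : forall y i, i < j ->
    eval_slot (s ++ y) (nth i tau (inr z)) = nth i (map (eval_slot s) tau) z).
  { intros y i li. rewrite nth_indep with (d' := eval_slot s (inr z)) by (rewrite length_map; lia).
    rewrite map_nth. destruct (nth i tau (inr z)) as [p|a] eqn:ei; simpl; auto.
    apply app_nth1. rewrite ls. apply hv. rewrite <- ei. apply nth_In. lia. }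
  assert (nth_app : forall y i, i < j -> nth (n + i) (s ++ y) z = nth i y z).
  { intros y i _. rewrite app_nth2 by lia. f_equal. lia. }
  split.
  - intros [y [ly [a b]]]. rewrite skipn_app_length in a by lia.
    replace (map (eval_slot s) tau) with y; auto.
    apply nth_ext with (d := z) (d' := z); [rewrite length_map; lia|].
    intros i li. rewrite <- (nth_app y i), b by lia. apply slot_app. lia.
  - intro a. exists (map (eval_slot s) tau). rewrite length_map. split; auto.
    rewrite skipn_app_length by lia. split; auto.
    intros i li. rewrite nth_app, slot_app; auto.
Qed.

(** * Definability of formulas *)

(* The environment of a formula is a list of blocks of coordinates: [TV i] is its [i]-th block,
   [TC l] a constant tuple, [FEx j] binds a block of length [j] and [FEx1] a single scalar. *)
Inductive term := TV (i : nat) | TC (l : list M).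
Inductive formula :=
  | FRel (R : list (list M) -> Prop) (ts : list term)
  | FNot (F : formula)
  | FAnd (F F' : formula)
  | FOr (F F' : formula)
  | FEx (j : nat) (F : formula)
  | FEx1 (F : formula).

Definition on_blocks (R : list (list M) -> Prop) (ls : list nat) (s : list M) :=
  exists env, map (@length M) env = ls /\ s = concat env /\ R env.

Definition definable_rel (ls : list nat) (R : list (list M) -> Prop) :=
  definable (list_sum ls) (on_blocks R ls).
Arguments definable_rel : simpl never.

Definition block_offset (ns : list nat) i := list_sum (firstn i ns).
Definition term_size (ns : list nat) t :=
  match t with TV i => nth i ns 0 | TC l => length l end.
Definition term_ok (ns : list nat) t := match t with TV i => i < length ns | TC _ => True end.
Definition term_val (env : list (list M)) t := match t with TV i => nth i env [] | TC l => l end.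
Definition term_slots (ns : list nat) t : list (nat + M) :=
  match t with
  | TV i => map inl (seq (block_offset ns i) (nth i ns 0))
  | TC l => map inr l
  end.

Fixpoint wf (ns : list nat) (F : formula) : Prop :=
  match F with
  | FRel R ts => definable_rel (map (term_size ns) ts) R /\ Forall (term_ok ns) ts
  | FNot F => wf ns F
  | FAnd F F' | FOr F F' => wf ns F /\ wf ns F'
  | FEx j F => wf (ns ++ [j]) F
  | FEx1 F => wf (ns ++ [1]) F
  end.

Fixpoint holds (env : list (list M)) (F : formula) : Prop :=
  match F with
  | FRel R ts => R (map (term_val env) ts)
  | FNot F => ~ holds env F
  | FAnd F F' => holds env F /\ holds env F'
  | FOr F F' => holds env F \/ holds env F'
  | FEx j F => exists y, length y = j /\ holds (env ++ [y]) F
  | FEx1 F => exists v, holds (env ++ [[v]]) F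
  end.

Fixpoint unconcat (ns : list nat) (s : list M) : list (list M) :=
  match ns with [] => [] | j :: r => firstn j s :: unconcat r (skipn j s) end.

Lemma unconcat_app ns j s y : length s = list_sum ns -> length y = j ->
  unconcat (ns ++ [j]) (s ++ y) = unconcat ns s ++ [y].
Proof.
  revert s; induction ns as [|a ns IH]; intros s ls ly; simpl in *.
  - destruct s; [|simpl in ls; lia]. simpl. rewrite <- ly, firstn_all. auto.
  - rewrite firstn_app, skipn_app. replace (a - length s) with 0 by lia.
    rewrite firstn_O, skipn_O, app_nil_r, IH; auto. rewrite length_skipn; lia.
Qed.

Lemma nth_unconcat ns s i : length s = list_sum ns -> i < length ns ->
  nth i (unconcat ns s) [] = firstn (nth i ns 0) (skipn (block_offset ns i) s).
Proof.
  unfold block_offset. revert s i; induction ns as [|a ns IH]; intros s i ls li; simpl in *; [lia|].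
  destruct i; simpl; auto.
  rewrite IH; [|rewrite length_skipn; lia | lia]. now rewrite skipn_skipn, Nat.add_comm.
Qed.

Lemma block_offset_bound ns i : i < length ns -> block_offset ns i + nth i ns 0 <= list_sum ns.
Proof.
  unfold block_offset; revert i; induction ns; intros [|i] l; simpl in *; try lia.
  specialize (IHns i ltac:(lia)). lia.
Qed.

Lemma map_nth_seq s a b : a + b <= length s ->
  map (fun p => nth p s z) (seq a b) = firstn b (skipn a s).
Proof.
  revert a; induction b as [|b IH]; intros a l; [reflexivity|].
  rewrite <- cons_seq, map_cons, IH by lia.
  rewrite <- (firstn_skipn a s) at 1. rewrite app_nth2; rewrite length_firstn; [|lia].
  replace (a - Nat.min a (length s)) with 0 by lia.
  assert (hs : length (skipn a s) > 0) by (rewrite length_skipn; lia).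
  destruct (skipn a s) as [|x r] eqn:e; simpl in hs; [lia|].
  replace (skipn (S a) s) with r; auto.
  change (S a) with (1 + a). now rewrite <- skipn_skipn, e.
Qed.

Lemma length_term_val ns s t : length s = list_sum ns -> term_ok ns t ->
  length (term_val (unconcat ns s) t) = term_size ns t.
Proof.
  intros ls ht. destruct t as [i|l]; simpl in *; auto.
  rewrite nth_unconcat, length_firstn, length_skipn by auto.
  pose proof (block_offset_bound ns i ht). lia.
Qed.

Lemma unconcat_concat env ls : map (@length M) env = ls -> unconcat ls (concat env) = env.
Proof.
  revert ls; induction env as [|x env IH]; intros ls h; subst ls; simpl; auto.
  rewrite firstn_app_length, skipn_app_length by auto. f_equal; auto.
Qed.

Lemma concat_unconcat ls s : length s = list_sum ls -> concat (unconcat ls s) = s.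
Proof.
  revert s; induction ls as [|a ls IH]; intros s h; simpl in *.
  - destruct s; simpl in *; auto; lia.
  - rewrite IH; [apply firstn_skipn | rewrite length_skipn; lia].
Qed.

Lemma map_length_unconcat ls s : length s = list_sum ls -> map (@length M) (unconcat ls s) = ls.
Proof.
  revert s; induction ls as [|a ls IH]; intros s h; simpl in *; auto.
  rewrite IH, length_firstn; [f_equal; lia | rewrite length_skipn; lia].
Qed.

Lemma on_blocks_concat R ls env : map (@length M) env = ls -> (on_blocks R ls (concat env) <-> R env).
Proof.
  intro h; split.
  - intros [env' [h1 [h2 h3]]].
    now rewrite <- (unconcat_concat env ls h), h2, (unconcat_concat env' ls h1).
  - intro p; exists env; auto.
Qed.

Lemma definable_on_unconcat ls R : definable (list_sum ls) (fun s => R (unconcat ls s)) ->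
  definable_rel ls R.
Proof.
  intro h. eapply definable_ext; [exact h|]. intros s l. cbv beta.
  rewrite <- (concat_unconcat ls s) at 2 by auto.
  rewrite on_blocks_concat by (apply map_length_unconcat; auto). tauto.
Qed.

Lemma definable_unconcat ls R : definable_rel ls R ->
  definable (list_sum ls) (fun s => R (unconcat ls s)).
Proof.
  intro h. eapply definable_ext; [exact h|]. intros s l. cbv beta.
  rewrite <- (concat_unconcat ls s) at 1 by auto.
  rewrite on_blocks_concat by (apply map_length_unconcat; auto). tauto.
Qed.

Theorem definable_formula F : forall ns, wf ns F ->
  definable (list_sum ns) (fun s => holds (unconcat ns s) F).
Proof.
  induction F as [R ts|F IH|F IHF F' IHF'|F IHF F' IHF'|j F IH|F IH]; intros ns w; simpl in *.
  - destruct w as [hR hts]. rewrite Forall_forall in hts.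
    eapply definable_ext.
    { apply (definable_subst (list_sum ns) _ _ (concat (map (term_slots ns) ts)) hR).
      - rewrite length_concat, !map_map. f_equal. apply map_ext. intros [i|l]; simpl.
        + now rewrite length_map, length_seq.
        + now rewrite length_map.
      - intros i hi. apply in_concat in hi. destruct hi as [l [h1 h2]].
        apply in_map_iff in h1. destruct h1 as [t [<- h3]]. specialize (hts t h3).
        destruct t as [i'|l']; simpl in *; apply in_map_iff in h2; destruct h2 as [p [e h4]];
          [|discriminate]. inversion e; subst. apply in_seq in h4.
        pose proof (block_offset_bound ns i' hts). lia. }
    intros s ls; cbv beta. rewrite concat_map, map_map.
    replace (map (fun t => map (eval_slot s) (term_slots ns t)) ts)
      with (map (term_val (unconcat ns s)) ts).
    + apply on_blocks_concat. rewrite map_map. apply map_ext_in. intros t ht.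
      apply length_term_val; auto.
    + apply map_ext_in. intros t ht. specialize (hts t ht).
      destruct t as [i|l]; simpl in *; rewrite map_map; simpl.
      * rewrite nth_unconcat, map_nth_seq; auto. pose proof (block_offset_bound ns i hts). lia.
      * now rewrite map_id.
  - apply definable_not; auto.
  - apply definable_and; intuition.
  - apply definable_or; intuition.
  - specialize (IH _ w). rewrite list_sum_app in IH. simpl in IH. rewrite Nat.add_0_r in IH.
    apply definable_ex in IH. eapply definable_ext; [exact IH|].
    intros s ls; split; intros [y [ly h]]; exists y; split; auto;
      rewrite unconcat_app in *; auto.
  - specialize (IH _ w). rewrite list_sum_app in IH. simpl in IH.
    replace (list_sum ns + 1) with (S (list_sum ns)) in IH by lia.
    apply definable_ex1 in IH. eapply definable_ext; [exact IH|].
    intros s ls; split; intros [v h]; exists v; rewrite unconcat_app in *; auto.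
Qed.

Lemma definable_rel_by ls R F : wf ls F ->
  (forall env, map (@length M) env = ls -> (holds env F <-> R env)) -> definable_rel ls R.
Proof.
  intros w h. apply definable_on_unconcat. eapply definable_ext; [apply definable_formula, w|].
  intros s l. apply h, map_length_unconcat, l.
Qed.

Lemma definable_rel_of_definable ls A R : definable (list_sum ls) A ->
  (forall env, map (@length M) env = ls -> (A (concat env) <-> R env)) -> definable_rel ls R.
Proof.
  intros hA h. apply definable_on_unconcat. eapply definable_ext; [exact hA|].
  intros s l. rewrite <- (concat_unconcat ls s) at 1 by auto. apply h, map_length_unconcat, l.
Qed.

Lemma D_of_definable_rel ls A R : definable_rel ls R ->
  (forall env, map (@length M) env = ls -> (R env <-> A (concat env))) ->
  (forall s, A s -> length s = list_sum ls) -> D (list_sum ls) A.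
Proof.
  intros hR h hl. apply D_of_definable; auto. apply definable_unconcat in hR.
  eapply definable_ext; [exact hR|]. intros s l.
  rewrite h by (apply map_length_unconcat, l). now rewrite concat_unconcat.
Qed.

Definition rel1 (A : list M -> Prop) (env : list (list M)) :=
  match env with [x] => A x | _ => False end.
Definition rel2 (R : list M -> list M -> Prop) (env : list (list M)) :=
  match env with [x; y] => R x y | _ => False end.
Definition rel3 (R : list M -> list M -> list M -> Prop) (env : list (list M)) :=
  match env with [x; y; w] => R x y w | _ => False end.

Lemma forall_env1 (P : list (list M) -> Prop) a : (forall x, length x = a -> P [x]) ->
  forall env, map (@length M) env = [a] -> P env.
Proof. intros h [|x [|? ?]] e; try discriminate. injection e. auto. Qed.

Lemma forall_env2 (P : list (list M) -> Prop) a b :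
  (forall x y, length x = a -> length y = b -> P [x; y]) ->
  forall env, map (@length M) env = [a; b] -> P env.
Proof. intros h [|x [|y [|? ?]]] e; try discriminate. injection e. auto. Qed.

Lemma forall_env3 (P : list (list M) -> Prop) a b c :
  (forall x y w, length x = a -> length y = b -> length w = c -> P [x; y; w]) ->
  forall env, map (@length M) env = [a; b; c] -> P env.
Proof. intros h [|x [|y [|w [|? ?]]]] e; try discriminate. injection e. auto. Qed.

Lemma length1 (y : list M) : length y = 1 -> exists v, y = [v].
Proof. destruct y as [|v [|w y]]; simpl; intro h; try lia; eauto. Qed.

Lemma definable_rel1_by a A F : wf [a] F ->
  (forall x, length x = a -> (holds [x] F <-> A x)) -> definable_rel [a] (rel1 A).
Proof. intros w h. apply (definable_rel_by _ _ F w). now apply forall_env1. Qed.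

Lemma definable_rel2_by a b R F : wf [a; b] F ->
  (forall x y, length x = a -> length y = b -> (holds [x; y] F <-> R x y)) ->
  definable_rel [a; b] (rel2 R).
Proof. intros w h. apply (definable_rel_by _ _ F w). now apply forall_env2. Qed.

Lemma definable_rel3_by a b c R F : wf [a; b; c] F ->
  (forall x y w, length x = a -> length y = b -> length w = c -> (holds [x; y; w] F <-> R x y w)) ->
  definable_rel [a; b; c] (rel3 R).
Proof. intros w h. apply (definable_rel_by _ _ F w). now apply forall_env3. Qed.

Lemma definable_rel1_of_D a A : D a A -> definable_rel [a] (rel1 A).
Proof.
  intro hA. apply (definable_rel_of_definable _ A); [apply definable_of_D; simpl; now rewrite Nat.add_0_r|].
  apply forall_env1. intros x _. simpl. now rewrite app_nil_r.
Qed.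

Lemma definable_rel2_of_D a b A R : D (a + b) A ->
  (forall x y, length x = a -> length y = b -> (A (x ++ y) <-> R x y)) ->
  definable_rel [a; b] (rel2 R).
Proof.
  intros hA h. apply (definable_rel_of_definable _ A).
  - apply definable_of_D. simpl. now rewrite Nat.add_0_r.
  - apply forall_env2. intros x y lx ly. simpl. rewrite app_nil_r. auto.
Qed.

Lemma definable_rel3_of_D a b c A R : D (a + b + c) A ->
  (forall x y w, length x = a -> length y = b -> length w = c -> (A (x ++ y ++ w) <-> R x y w)) ->
  definable_rel [a; b; c] (rel3 R).
Proof.
  intros hA h. apply (definable_rel_of_definable _ A).
  - apply definable_of_D. simpl. now rewrite Nat.add_0_r, Nat.add_assoc.
  - apply forall_env3. intros x y w lx ly lw. simpl. rewrite app_nil_r. auto.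
Qed.

Lemma D_of_definable_rel1 a A : definable_rel [a] (rel1 A) ->
  (forall s, A s -> length s = a) -> D a A.
Proof.
  intros hA hl. rewrite <- (Nat.add_0_r a). change (a + 0) with (list_sum [a]).
  apply (D_of_definable_rel _ A _ hA); [|simpl; intros s hs; rewrite hl; auto].
  apply forall_env1. intros x _. simpl. now rewrite app_nil_r.
Qed.

Lemma D_of_definable_rel2 a b A R : definable_rel [a; b] (rel2 R) ->
  (forall x y, length x = a -> length y = b -> (R x y <-> A (x ++ y))) ->
  (forall s, A s -> length s = a + b) -> D (a + b) A.
Proof.
  intros hR h hl. replace (a + b) with (list_sum [a; b]) in * by (simpl; lia).
  apply (D_of_definable_rel _ A _ hR); auto.
  apply forall_env2. intros x y lx ly. simpl. rewrite app_nil_r. auto.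
Qed.

Lemma D_of_definable_rel3 a b c A R : definable_rel [a; b; c] (rel3 R) ->
  (forall x y w, length x = a -> length y = b -> length w = c -> (R x y w <-> A (x ++ y ++ w))) ->
  (forall s, A s -> length s = a + b + c) -> D (a + b + c) A.
Proof.
  intros hR h hl. replace (a + b + c) with (list_sum [a; b; c]) in * by (simpl; lia).
  apply (D_of_definable_rel _ A _ hR); auto.
  apply forall_env3. intros x y w lx ly lw. simpl. rewrite app_nil_r. auto.
Qed.

Lemma definable_graph_of_def_fun a c A f : def_fun D a c A f ->
  definable_rel [a; c] (rel2 (fun x w => A x /\ w = f x)).
Proof.
  intro h. apply (definable_rel2_of_D _ _ _ _ h). intros x w lx lw.
  rewrite firstn_app_length, skipn_app_length by auto. split; intros [p q]; auto.
Qed.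

Lemma def_fun_of_definable_graph a c A f : definable_rel [a; c] (rel2 (fun x w => A x /\ w = f x)) ->
  (forall x, A x -> length x = a) -> (forall x, A x -> length (f x) = c) -> def_fun D a c A f.
Proof.
  intros h la lf. apply (D_of_definable_rel2 _ _ _ _ h).
  - intros x w lx lw. rewrite firstn_app_length, skipn_app_length by auto. tauto.
  - intros s [hx hs]. rewrite <- (firstn_skipn a s), length_app, hs, la, lf; auto.
Qed.

Lemma definable_graph_of_def_fun2 a b c A B f : def_fun2 D a b c A B f ->
  definable_rel [a; b; c] (rel3 (fun x y w => A x /\ B y /\ w = f x y)).
Proof.
  intro h. apply (definable_rel3_of_D _ _ _ _ _ h). intros x y w lx ly lw.
  rewrite firstn_app_length, skipn_app_length, firstn_app_length by auto.
  rewrite app_assoc, skipn_app_length by (rewrite length_app; lia). tauto.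
Qed.

Lemma def_fun2_of_definable_graph a b c A B f :
  definable_rel [a; b; c] (rel3 (fun x y w => A x /\ B y /\ w = f x y)) ->
  (forall x, A x -> length x = a) -> (forall y, B y -> length y = b) ->
  (forall x y, A x -> B y -> length (f x y) = c) -> def_fun2 D a b c A B f.
Proof.
  intros h la lb lf. apply (D_of_definable_rel3 _ _ _ _ _ h).
  - intros x y w lx ly lw. rewrite firstn_app_length, skipn_app_length, firstn_app_length by auto.
    rewrite app_assoc, skipn_app_length by (rewrite length_app; lia). tauto.
  - intros s [hx [hy hs]].
    rewrite <- (firstn_skipn (a + b) s), length_app, hs, lf, length_firstn; auto.
    enough (a + b <= length s) by lia.
    rewrite <- (firstn_skipn a s), length_app, la by auto.
    pose proof (lb _ hy) as e. rewrite length_firstn in e. lia.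
Qed.

Local Notation FIn A t := (FRel (rel1 A) [t]).
Local Notation FLt t1 t2 := (FRel (rel2 (fun u v => hd z u <' hd z v)) [t1; t2]).
Local Notation FEq t1 t2 := (FRel (rel2 (fun u v => hd z u = hd z v)) [t1; t2]).
Local Notation FLe t1 t2 := (FRel (rel2 (fun u v => hd z u <=' hd z v)) [t1; t2]).
Local Notation FImp F F' := (FOr (FNot F) F').
Local Notation FAll1 F := (FNot (FEx1 (FNot F))).

Ltac solve_wf :=
  simpl; repeat match goal with |- _ /\ _ => split | |- Forall _ _ => constructor end;
  simpl; auto; try lia.

Lemma definable_lt : definable_rel [1; 1] (rel2 (fun u v => hd z u <' hd z v)).
Proof.
  destruct HD as [_ [_ [_ [_ [_ [_ [_ [_ [_ [_ [hlt _]]]]]]]]]]].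
  apply (definable_rel2_of_D 1 1 _ _ hlt). intros x y lx ly.
  destruct (length1 x lx) as [a ->], (length1 y ly) as [b ->]. simpl. split.
  - intros [a' [b' [e h]]]. now injection e as -> ->.
  - intro h. eauto.
Qed.

Lemma definable_eq : definable_rel [1; 1] (rel2 (fun u v => hd z u = hd z v)).
Proof.
  apply (definable_rel_of_definable [1; 1] (fun s => nth 0 s z = nth 1 s z)).
  { apply definable_nth_eq; simpl; lia. }
  apply forall_env2. intros x y lx ly.
  destruct (length1 x lx) as [a ->], (length1 y ly) as [b ->]. reflexivity.
Qed.

Lemma definable_le : definable_rel [1; 1] (rel2 (fun u v => hd z u <=' hd z v)).
Proof.
  apply (definable_rel2_by _ _ _ (FOr (FLt (TV 0) (TV 1)) (FEq (TV 0) (TV 1)))).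
  - solve_wf; auto using definable_lt, definable_eq.
  - intros x y _ _. reflexivity.
Qed.

Local Hint Resolve definable_lt definable_le : core.

Hypothesis HO : dense_ordered_group O.

Lemma lt_irr x : ~ x <' x.
Proof. destruct HO as [h _]; apply h. Qed.

Lemma lt_trans x y w : x <' y -> y <' w -> x <' w.
Proof. destruct HO as [_ [h _]]; apply h. Qed.

Lemma lt_tri x y : x <' y \/ x = y \/ y <' x.
Proof. destruct HO as [_ [_ [h _]]]; apply h. Qed.

Lemma add_assoc x y w : x +' (y +' w) = x +' y +' w.
Proof. destruct HO as [_ [_ [_ [h _]]]]; apply h. Qed.

Lemma add_comm x y : x +' y = y +' x.
Proof. destruct HO as [_ [_ [_ [_ [h _]]]]]; apply h. Qed.

Lemma add_0l x : z +' x = x.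
Proof. destruct HO as [_ [_ [_ [_ [_ [h _]]]]]]; apply h. Qed.

Lemma add_oppl x : -' x +' x = z.
Proof. destruct HO as [_ [_ [_ [_ [_ [_ [h _]]]]]]]; apply h. Qed.

Lemma lt_add_r x y w : x <' y -> x +' w <' y +' w.
Proof. destruct HO as [_ [_ [_ [_ [_ [_ [_ [h _]]]]]]]]; apply h. Qed.

Lemma dense x y : x <' y -> exists w, x <' w /\ w <' y.
Proof. destruct HO as [_ [_ [_ [_ [_ [_ [_ [_ [h _]]]]]]]]]; apply h. Qed.

Lemma noend x : exists y w, y <' x /\ x <' w.
Proof. destruct HO as [_ [_ [_ [_ [_ [_ [_ [_ [_ h]]]]]]]]]; apply h. Qed.

Lemma add_0r x : x +' z = x.
Proof. rewrite add_comm; apply add_0l. Qed.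

Lemma add_oppr x : x +' -' x = z.
Proof. rewrite add_comm; apply add_oppl. Qed.

Lemma lt_add_l x y w : x <' y -> w +' x <' w +' y.
Proof. intro h; rewrite (add_comm w x), (add_comm w y); now apply lt_add_r. Qed.

Lemma add_K x w : x +' w +' -' w = x.
Proof. now rewrite <- add_assoc, add_oppr, add_0r. Qed.

Lemma add_Kr x w : x +' -' w +' w = x.
Proof. now rewrite <- add_assoc, add_oppl, add_0r. Qed.

Lemma lt_add_r_iff x y w : x +' w <' y +' w <-> x <' y.
Proof. split; [intro h | apply lt_add_r]. apply (lt_add_r _ _ (-' w)) in h. now rewrite !add_K in h. Qed.

Lemma lt_asym x y : x <' y -> ~ y <' x.
Proof. intros h1 h2; apply (lt_irr x); eapply lt_trans; eauto. Qed.

Lemma le_refl x : x <=' x.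
Proof. now right. Qed.

Lemma lt_le x y : x <' y -> x <=' y.
Proof. now left. Qed.

Lemma le_lt_trans x y w : x <=' y -> y <' w -> x <' w.
Proof. intros [h|h] h2; [eapply lt_trans; eauto | now subst]. Qed.

Lemma lt_le_trans x y w : x <' y -> y <=' w -> x <' w.
Proof. intros h [h2|h2]; [eapply lt_trans; eauto | now subst]. Qed.

Lemma le_trans x y w : x <=' y -> y <=' w -> x <=' w.
Proof. intros [h|h] h2; [left; eapply lt_le_trans; eauto | now subst]. Qed.

Lemma le_not_lt x y : x <=' y <-> ~ y <' x.
Proof.
  split.
  - intros [h|h] h2; [eapply lt_asym; eauto | subst; eapply lt_irr; eauto].
  - intro h. destruct (lt_tri x y) as [a|[a|a]]; [now left | now right | tauto].
Qed.

Lemma not_le_lt x y : ~ x <=' y -> y <' x.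
Proof. intro h. rewrite le_not_lt in h. now apply NNPP. Qed.

Lemma le_antisym x y : x <=' y -> y <=' x -> x = y.
Proof. intros [h|h] h2; auto. apply le_not_lt in h2; tauto. Qed.

Lemma le_total x y : x <=' y \/ y <=' x.
Proof. destruct (lt_tri x y) as [a|[a|a]]; [left;left|left;right|right;left]; auto. Qed.

Lemma le_add_r x y w : x <=' y -> x +' w <=' y +' w.
Proof. intros [h|h]; [left; now apply lt_add_r| subst; now right]. Qed.

Lemma le_add_l x y w : x <=' y -> w +' x <=' w +' y.
Proof. intro h; rewrite (add_comm w x), (add_comm w y); now apply le_add_r. Qed.

Lemma le_add x y u v : x <=' y -> u <=' v -> x +' u <=' y +' v.
Proof. intros h1 h2. eapply le_trans; [apply le_add_r; eauto | apply le_add_l; eauto]. Qed.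

Lemma lt_add x y u v : x <' y -> u <' v -> x +' u <' y +' v.
Proof. intros h1 h2. eapply lt_trans; [apply lt_add_r; eauto | apply lt_add_l; eauto]. Qed.

Lemma le_lt_add x y u v : x <=' y -> u <' v -> x +' u <' y +' v.
Proof. intros h1 h2. eapply le_lt_trans; [apply le_add_r; eauto | apply lt_add_l; eauto]. Qed.

Lemma le_add_pos x a : z <=' a -> x <=' x +' a.
Proof. intro h. apply (le_add_l _ _ x) in h. now rewrite add_0r in h. Qed.

Lemma lt_sub_l a b c : a <' b +' c <-> a +' -' c <' b.
Proof. rewrite <- (lt_add_r_iff (a +' -' c) b c), add_Kr. tauto. Qed.

Lemma le_sub_l a b c : a <=' b +' c <-> a +' -' c <=' b.
Proof. rewrite !le_not_lt. rewrite <- (lt_add_r_iff b (a +' -' c) c), add_Kr. tauto. Qed.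

Lemma lt_sub_r a b c : a +' c <' b <-> a <' b +' -' c.
Proof. rewrite <- (lt_add_r_iff a (b +' -' c) c), add_Kr. tauto. Qed.

Lemma sub_pos a b : a <' b <-> z <' b +' -' a.
Proof. rewrite <- lt_sub_r, add_0l. tauto. Qed.

Lemma half eps : z <' eps -> exists b, z <' b /\ b +' b <=' eps.
Proof.
  intro he. destruct (dense _ _ he) as [a [ha1 ha2]].
  destruct (classic (a +' a <=' eps)) as [h|h]; [exists a; auto|].
  apply not_le_lt, lt_sub_l in h. exists (eps +' -' a). split; [apply (proj1 (sub_pos _ _)), ha2|].
  apply lt_le. apply (lt_add_l _ _ (eps +' -' a)) in h. now rewrite add_Kr in h.
Qed.

Lemma pos_min a b : z <' a -> z <' b -> exists t, z <' t /\ t <=' a /\ t <=' b.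
Proof.
  intros ha hb. destruct (le_total a b) as [h|h]; [exists a | exists b]; repeat split; auto using le_refl.
Qed.

Lemma add_sub_cancel p b : p +' (b +' -' p) = b.
Proof. rewrite add_comm. apply add_Kr. Qed.

Lemma lt_of_lt_add_sub p q a : p <' q +' (p +' -' a) -> a <' q.
Proof.
  intro h. apply (lt_add_r _ _ a) in h. rewrite <- add_assoc, add_Kr, (add_comm p a) in h.
  now apply lt_add_r_iff in h.
Qed.

Hypothesis Hdc : definably_complete O D.

Definition scalars (P : M -> Prop) (s : list M) := exists v, s = [v] /\ P v.

Lemma sup_exists P : D 1 (scalars P) -> (exists v, P v) -> (exists b, forall v, P v -> v <=' b) ->
  exists u, is_sup O (scalars P) (EFin u).
Proof.
  intros hP [v0 h0] [b hb]. destruct (Hdc _ hP) as [[[| u |] hs] _]; [exfalso | eauto | exfalso].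
  - destruct hs as [h _]. apply (h v0). exists v0; auto.
  - destruct hs as [_ h]. apply (h (EFin b)). intros y [v [e hv]]. injection e as ->. apply hb, hv.
Qed.

Lemma inf_exists P : D 1 (scalars P) -> (exists v, P v) -> (exists b, forall v, P v -> b <=' v) ->
  exists u, is_inf O (scalars P) (EFin u).
Proof.
  intros hP [v0 h0] [b hb]. destruct (Hdc _ hP) as [_ [[| u |] hs]]; [exfalso | eauto | exfalso].
  - destruct hs as [_ h]. apply (h (EFin b)). intros y [v [e hv]]. injection e as ->. apply hb, hv.
  - destruct hs as [h _]. apply (h v0). exists v0; auto.
Qed.

Definition sup_of P := epsilon (inhabits z) (fun u => is_sup O (scalars P) (EFin u)).
Definition inf_of P := epsilon (inhabits z) (fun u => is_inf O (scalars P) (EFin u)).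

Lemma sup_ub P u v : is_sup O (scalars P) (EFin u) -> P v -> v <=' u.
Proof. intros [h _] hv. apply (h v). exists v; auto. Qed.

Lemma sup_least P u b : is_sup O (scalars P) (EFin u) -> (forall v, P v -> v <=' b) -> u <=' b.
Proof. intros [_ h] hb. apply (h (EFin b)). intros y [v [e hv]]. injection e as ->. apply hb, hv. Qed.

Lemma inf_lb P u v : is_inf O (scalars P) (EFin u) -> P v -> u <=' v.
Proof. intros [h _] hv. apply (h v). exists v; auto. Qed.

Lemma inf_greatest P u b : is_inf O (scalars P) (EFin u) -> (forall v, P v -> b <=' v) -> b <=' u.
Proof. intros [_ h] hb. apply (h (EFin b)). intros y [v [e hv]]. injection e as ->. apply hb, hv. Qed.

Lemma sup_approx P u w : is_sup O (scalars P) (EFin u) -> w <' u -> exists v, P v /\ w <' v.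
Proof.
  intros hs hw. apply NNPP; intro hn. apply (proj1 (le_not_lt u w)); auto.
  apply (sup_least P); auto. intros v hv. apply le_not_lt. eauto.
Qed.

Lemma inf_approx P u w : is_inf O (scalars P) (EFin u) -> u <' w -> exists v, P v /\ v <' w.
Proof.
  intros hs hw. apply NNPP; intro hn. apply (proj1 (le_not_lt w u)); auto.
  apply (inf_greatest P); auto. intros v hv. apply le_not_lt. eauto.
Qed.

Lemma sup_char P u w : is_sup O (scalars P) (EFin u) ->
  (w = u <-> (forall v, P v -> v <=' w) /\ (forall w', w' <' w -> exists v, P v /\ w' <' v)).
Proof.
  intro hs. split.
  - intros ->. split; intros; [eapply sup_ub | eapply sup_approx]; eauto.
  - intros [h1 h2]. apply le_antisym; [|eapply sup_least; eauto].
    apply le_not_lt. intro hl. destruct (h2 _ hl) as [v [hv hv']].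
    apply (proj1 (le_not_lt v u)); auto. eapply sup_ub; eauto.
Qed.

Lemma inf_char P u w : is_inf O (scalars P) (EFin u) ->
  (w = u <-> (forall v, P v -> w <=' v) /\ (forall w', w <' w' -> exists v, P v /\ v <' w')).
Proof.
  intro hs. split.
  - intros ->. split; intros; [eapply inf_lb | eapply inf_approx]; eauto.
  - intros [h1 h2]. apply le_antisym; [eapply inf_greatest; eauto|].
    apply le_not_lt. intro hl. destruct (h2 _ hl) as [v [hv hv']].
    apply (proj1 (le_not_lt u v)); auto. eapply inf_lb; eauto.
Qed.

Local Notation family2 A B P := (fun x y w => A x /\ B y /\ exists v, w = [v] /\ P x y v).
Local Notation graph2 A B f := (fun x y w => A x /\ B y /\ w = f x y).

Lemma D_scalars_fiber a b A B P x y :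
  definable_rel [a; b; 1] (rel3 (family2 A B P)) -> A x -> B y -> length x = a -> length y = b ->
  D 1 (scalars (P x y)).
Proof.
  intros hF hx hy lx ly. apply D_of_definable_rel1.
  - apply (definable_rel1_by _ _ (FRel (rel3 (family2 A B P)) [TC x; TC y; TV 0])).
    + solve_wf. now rewrite lx, ly.
    + intros w _. simpl. unfold scalars. tauto.
  - intros s [v [-> _]]. reflexivity.
Qed.

Lemma definable_sup_graph a b A B P f :
  definable_rel [a] (rel1 A) -> definable_rel [b] (rel1 B) ->
  definable_rel [a; b; 1] (rel3 (family2 A B P)) ->
  (forall x y, A x -> B y -> is_sup O (scalars (P x y)) (EFin (f x y))) ->
  definable_rel [a; b; 1] (rel3 (graph2 A B (fun x y => [f x y]))).
Proof.
  intros hA hB hF hs.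
  apply (definable_rel3_by _ _ _ _ (FAnd (FIn A (TV 0)) (FAnd (FIn B (TV 1)) (FAnd
    (FAll1 (FImp (FRel (rel3 (family2 A B P)) [TV 0; TV 1; TV 3]) (FLe (TV 3) (TV 2))))
    (FAll1 (FImp (FLt (TV 3) (TV 2))
      (FEx1 (FAnd (FRel (rel3 (family2 A B P)) [TV 0; TV 1; TV 4]) (FLt (TV 3) (TV 4)))))))))).
  { solve_wf. }
  intros x y w _ _ lw. destruct (length1 w lw) as [u ->]. simpl.
  split; intros [hx [hy h]]; split; auto; split; auto.
  - f_equal. apply (sup_char _ _ _ (hs x y hx hy)). destruct h as [h1 h2]. split.
    + intros v hv. apply NNPP; intro hn. apply h1. exists v.
      intros [a' | b']; [apply a'; split; auto; split; eauto | auto].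
    + intros w hw. apply NNPP; intro hn. apply h2. exists w.
      intros [a' | [v [[_ [_ [v' [e hv]]]] hwv]]]; [auto | injection e as <-; eauto].
  - injection h as ->. destruct (proj1 (sup_char _ _ _ (hs x y hx hy)) eq_refl) as [h1 h2]. split.
    + intros [v hv]. apply hv. destruct (classic (P x y v)) as [p | p]; [right; auto | left].
      intros [_ [_ [v' [e hv']]]]. injection e as <-. auto.
    + intros [w hw]. apply hw. destruct (classic (w <' f x y)) as [p | p]; [right | left; auto].
      destruct (h2 w p) as [v [hv hwv]]. exists v. split; [split; auto; split; eauto | auto].
Qed.

Lemma definable_inf_graph a b A B P f :
  definable_rel [a] (rel1 A) -> definable_rel [b] (rel1 B) ->
  definable_rel [a; b; 1] (rel3 (family2 A B P)) ->
  (forall x y, A x -> B y -> is_inf O (scalars (P x y)) (EFin (f x y))) ->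
  definable_rel [a; b; 1] (rel3 (graph2 A B (fun x y => [f x y]))).
Proof.
  intros hA hB hF hs.
  apply (definable_rel3_by _ _ _ _ (FAnd (FIn A (TV 0)) (FAnd (FIn B (TV 1)) (FAnd
    (FAll1 (FImp (FRel (rel3 (family2 A B P)) [TV 0; TV 1; TV 3]) (FLe (TV 2) (TV 3))))
    (FAll1 (FImp (FLt (TV 2) (TV 3))
      (FEx1 (FAnd (FRel (rel3 (family2 A B P)) [TV 0; TV 1; TV 4]) (FLt (TV 4) (TV 3)))))))))).
  { solve_wf. }
  intros x y w _ _ lw. destruct (length1 w lw) as [u ->]. simpl.
  split; intros [hx [hy h]]; split; auto; split; auto.
  - f_equal. apply (inf_char _ _ _ (hs x y hx hy)). destruct h as [h1 h2]. split.
    + intros v hv. apply NNPP; intro hn. apply h1. exists v.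
      intros [a' | b']; [apply a'; split; auto; split; eauto | auto].
    + intros w hw. apply NNPP; intro hn. apply h2. exists w.
      intros [a' | [v [[_ [_ [v' [e hv]]]] hwv]]]; [auto | injection e as <-; eauto].
  - injection h as ->. destruct (proj1 (inf_char _ _ _ (hs x y hx hy)) eq_refl) as [h1 h2]. split.
    + intros [v hv]. apply hv. destruct (classic (P x y v)) as [p | p]; [right; auto | left].
      intros [_ [_ [v' [e hv']]]]. injection e as <-. auto.
    + intros [w hw]. apply hw. destruct (classic (f x y <' w)) as [p | p]; [right | left; auto].
      destruct (h2 w p) as [v [hv hwv]]. exists v. split; [split; auto; split; eauto | auto].
Qed.

Section MetricFacts.
Variables (A : list M -> Prop) (d : list M -> list M -> M).
Hypothesis Hd : is_metric O A d.

Lemma metric_nonneg x y : A x -> A y -> z <=' d x y.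
Proof. intros; apply (Hd x y x); auto. Qed.

Lemma metric_self x : A x -> d x x = z.
Proof. intros; apply (Hd x x x); auto. Qed.

Lemma metric_eq0 x y : A x -> A y -> d x y = z -> x = y.
Proof. intros; apply (Hd x y x); auto. Qed.

Lemma metric_sym x y : A x -> A y -> d x y = d y x.
Proof. intros; apply (Hd x y x); auto. Qed.

Lemma metric_triangle x y w : A x -> A y -> A w -> d x w <=' d x y +' d y w.
Proof. intros; apply (Hd x y w); auto. Qed.

End MetricFacts.

Variables (m : nat) (G : list M -> Prop) (dG : list M -> list M -> M)
  (mul : list M -> list M -> list M) (inv : list M -> list M) (e : list M).
Hypothesis HG : definable_metric_group O D m G dG mul inv e.
Hypothesis HGc : definably_compact_metric O D m G dG.
Variables (n : nat) (X : list M -> Prop) (dX : list M -> list M -> M).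
Hypothesis HX : definable_metric_space O D n X dX.
Variable act : list M -> list M -> list M.
Hypothesis Hact : definable_cont_action O D m G dG mul e n X dX act.
Variables (k : nat) (Q : list M -> Prop) (l : nat) (TQ : list M -> Prop)
  (BQ : list M -> list M -> Prop) (pi : list M -> list M).
Hypothesis HQ : is_definable_quotient O D m G n X dX act k Q l TQ BQ pi.

Lemma X_length x : X x -> length x = n.
Proof. intro h. eapply D_length; eauto. apply HX. Qed.

Lemma G_length g : G g -> length g = m.
Proof. intro h. eapply D_length; eauto. apply HG. Qed.

Lemma Q_length q : Q q -> length q = k.
Proof. intro h. eapply D_length; eauto. apply HQ. Qed.

Lemma dX_nonneg x y : X x -> X y -> z <=' dX x y. Proof. apply metric_nonneg, HX. Qed.
Lemma dX_self x : X x -> dX x x = z. Proof. apply metric_self, HX. Qed.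
Lemma dX_eq0 x y : X x -> X y -> dX x y = z -> x = y. Proof. apply metric_eq0, HX. Qed.
Lemma dX_sym x y : X x -> X y -> dX x y = dX y x. Proof. apply metric_sym, HX. Qed.
Lemma dX_triangle x y w : X x -> X y -> X w -> dX x w <=' dX x y +' dX y w.
Proof. apply metric_triangle, HX. Qed.
Lemma dG_self g : G g -> dG g g = z. Proof. apply metric_self, HG. Qed.
Lemma dG_triangle g h w : G g -> G h -> G w -> dG g w <=' dG g h +' dG h w.
Proof. apply metric_triangle, HG. Qed.

Lemma G_e : G e. Proof. apply HG. Qed.
Lemma G_mul g h : G g -> G h -> G (mul g h). Proof. apply HG. Qed.
Lemma G_inv g : G g -> G (inv g). Proof. apply HG. Qed.
Lemma mul_inv_l g : G g -> mul (inv g) g = e. Proof. apply HG. Qed.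
Lemma act_X g x : G g -> X x -> X (act g x). Proof. apply Hact. Qed.
Lemma act_e x : X x -> act e x = x. Proof. apply Hact. Qed.
Lemma act_mul g h x : G g -> G h -> X x -> act (mul g h) x = act g (act h x). Proof. apply Hact. Qed.
Lemma act_cont g x eps : G g -> X x -> z <' eps -> exists del, z <' del /\
  forall g' x', G g' -> X x' -> dG g g' <' del -> dX x x' <' del -> dX (act g x) (act g' x') <' eps.
Proof. apply Hact. Qed.

Lemma act_inv g x : G g -> X x -> act (inv g) (act g x) = x.
Proof. intros. rewrite <- act_mul, mul_inv_l, act_e; auto using G_inv. Qed.

Lemma pi_Q x : X x -> Q (pi x). Proof. apply HQ. Qed.
Lemma pi_surj q : Q q -> exists x, X x /\ pi x = q. Proof. apply HQ. Qed.
Lemma pi_act g x : G g -> X x -> pi (act g x) = pi x. Proof. apply HQ. Qed.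

Local Hint Resolve X_length G_length Q_length act_X G_e G_mul G_inv pi_Q : core.

Lemma definable_X : definable_rel [n] (rel1 X). Proof. apply definable_rel1_of_D, HX. Qed.
Lemma definable_G : definable_rel [m] (rel1 G). Proof. apply definable_rel1_of_D, HG. Qed.
Lemma definable_Q : definable_rel [k] (rel1 Q). Proof. apply definable_rel1_of_D, HQ. Qed.

Lemma definable_dX : definable_rel [n; n; 1] (rel3 (graph2 X X (fun x y => [dX x y]))).
Proof. apply definable_graph_of_def_fun2, HX. Qed.

Lemma definable_dG : definable_rel [m; m; 1] (rel3 (graph2 G G (fun g h => [dG g h]))).
Proof. apply definable_graph_of_def_fun2, HG. Qed.

Lemma definable_act : definable_rel [m; n; n] (rel3 (graph2 G X act)).
Proof. apply definable_graph_of_def_fun2, Hact. Qed.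

Lemma definable_pi : definable_rel [n; k] (rel2 (fun x q => X x /\ q = pi x)).
Proof. apply definable_graph_of_def_fun, HQ. Qed.

Local Hint Resolve definable_X definable_G definable_Q definable_dX definable_dG definable_act
  definable_pi : core.

Local Notation FdX t1 t2 t3 := (FRel (rel3 (graph2 X X (fun x y => [dX x y]))) [t1; t2; t3]).
Local Notation FdG t1 t2 t3 := (FRel (rel3 (graph2 G G (fun g h => [dG g h]))) [t1; t2; t3]).
Local Notation FAct t1 t2 t3 := (FRel (rel3 (graph2 G X act)) [t1; t2; t3]).
Local Notation FPi t1 t2 := (FRel (rel2 (fun x q => X x /\ q = pi x)) [t1; t2]).

Lemma definably_compact_scalar_family (P1 : M -> Prop) (P2 : M -> list M -> Prop) :
  definable_rel [1] (rel1 (scalars P1)) ->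
  definable_rel [1; m] (rel2 (fun w g => exists t, w = [t] /\ P1 t /\ P2 t g)) ->
  (forall t g, P2 t g -> G g) ->
  (forall t, P1 t -> exists g, P2 t g) ->
  (forall t, P1 t -> forall g, G g -> ~ P2 t g ->
     exists eps, z <' eps /\ forall g', G g' -> dG g g' <' eps -> ~ P2 t g') ->
  (forall t1 t2, P1 t1 -> P1 t2 -> exists t3, P1 t3 /\ forall g, P2 t3 g -> P2 t1 g /\ P2 t2 g) ->
  exists g, G g /\ forall t, P1 t -> P2 t g.
Proof.
  intros hP1 hP2 hG hne hcl hfi.
  destruct (HGc 1 (scalars P1) (fun s g => exists t, s = [t] /\ P2 t g)) as [g0 [hg0 h0]].
  - apply D_of_definable_rel1; auto. intros s [t [-> _]]. reflexivity.
  - apply (D_of_definable_rel2 _ _ _ _ hP2).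
    + intros w g lw lg. destruct (length1 w lw) as [t ->]. simpl. split.
      * intros [t' [ev [h1 h2]]]. injection ev as <-. split; exists t; auto.
      * intros [[t1 [e1 h1]] [t2 [e2 h2]]]. injection e1 as ->. injection e2 as ->. eauto.
    + intros s [[t1 [e1 _]] [t2 [e2 h2]]].
      rewrite <- (firstn_skipn 1 s), length_app, e1, (G_length _ (hG _ _ h2)). reflexivity.
  - intros t g [t' [-> _]] [t'' [_ h]]. eauto.
  - intros t [t' [-> h]]. destruct (hne t' h) as [g hg]. eauto.
  - intros t [t' [-> h]] g hg hn. destruct (hcl t' h g hg) as [eps [he hc]].
    { intro h2; apply hn; eauto. }
    exists eps. split; auto. intros g' hg' hd [t'' [ev h3]]. injection ev as <-. eapply hc; eauto.
  - intros t1 t2 [a [-> ha]] [b [-> hb]]. destruct (hfi a b ha hb) as [t3 [h3 h4]].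
    exists [t3]. split; [exists t3; auto|].
    intros g [t' [ev h5]]. injection ev as ->. destruct (h4 g h5). split; eauto.
  - exists g0. split; auto. intros t ht. destruct (h0 [t]) as [t' [ev h]]; [exists t; auto|].
    injection ev as ->; auto.
Qed.

(** * An invariant metric on X *)

Definition trunc : M := epsilon (inhabits z) (fun w => z <' w).

Lemma trunc_pos : z <' trunc.
Proof. unfold trunc. apply epsilon_spec. destruct (noend z) as [y [w [_ h]]]; eauto. Qed.

(* Truncating at [trunc] keeps the supremum bounded, so it exists by definable completeness. *)
Definition dinv_cand x y v := v <=' trunc /\ exists g, G g /\ v <=' dX (act g x) (act g y).
Definition dinv x y := sup_of (dinv_cand x y).
Local Notation Fdinv t1 t2 t3 := (FRel (rel3 (graph2 X X (fun x y => [dinv x y]))) [t1; t2; t3]).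

Lemma definable_dinv_cand : definable_rel [n; n; 1] (rel3 (family2 X X dinv_cand)).
Proof.
  apply (definable_rel3_by _ _ _ _ (FAnd (FIn X (TV 0)) (FAnd (FIn X (TV 1)) (FAnd
    (FLe (TV 2) (TC [trunc])) (FEx m (FAnd (FIn G (TV 3))
    (FEx n (FAnd (FAct (TV 3) (TV 0) (TV 4))
    (FEx n (FAnd (FAct (TV 3) (TV 1) (TV 5))
    (FEx1 (FAnd (FdX (TV 4) (TV 5) (TV 6))
      (FLe (TV 2) (TV 6)))))))))))))).
  { solve_wf. }
  intros x y w _ _ lw. destruct (length1 w lw) as [v ->]. simpl. split.
  - intros [hx [hy [hv [g [_ [hg [a [_ [[_ [_ ->]] [b [_ [[_ [_ ->]] [r [[_ [_ hr]] hle]]]]]]]]]]]]]].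
    injection hr as ->. repeat split; auto. exists v. split; auto. split; eauto.
  - intros [hx [hy [v' [ev [hv [g [hg hle]]]]]]]. injection ev as <-.
    repeat split; auto. exists g. repeat split; auto. exists (act g x). repeat split; auto.
    exists (act g y). repeat split; auto. exists (dX (act g x) (act g y)). repeat split; auto.
Qed.

Lemma dinv_cand_zero x y : X x -> X y -> dinv_cand x y z.
Proof.
  intros hx hy. split; [apply lt_le, trunc_pos|].
  exists e. split; auto. apply dX_nonneg; auto.
Qed.

Lemma dinv_sup x y : X x -> X y -> is_sup O (scalars (dinv_cand x y)) (EFin (dinv x y)).
Proof.
  intros hx hy. unfold dinv, sup_of. apply epsilon_spec, sup_exists.
  - eapply D_scalars_fiber; eauto using definable_dinv_cand.
  - exists z. apply dinv_cand_zero; auto.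
  - exists trunc. intros v [h _]; auto.
Qed.

Lemma dinv_ub x y v : X x -> X y -> dinv_cand x y v -> v <=' dinv x y.
Proof. intros hx hy. apply (sup_ub (dinv_cand x y)), dinv_sup; auto. Qed.

Lemma dinv_least x y b : X x -> X y -> (forall v, dinv_cand x y v -> v <=' b) -> dinv x y <=' b.
Proof. intros hx hy. apply (sup_least (dinv_cand x y)), dinv_sup; auto. Qed.

Lemma definable_dinv : definable_rel [n; n; 1] (rel3 (graph2 X X (fun x y => [dinv x y]))).
Proof. apply (definable_sup_graph _ _ _ _ dinv_cand); auto using definable_dinv_cand, dinv_sup. Qed.

Lemma dinv_ge_act x y g t : X x -> X y -> G g -> t <=' trunc ->
  t <=' dX (act g x) (act g y) -> t <=' dinv x y.
Proof. intros. apply dinv_ub; auto. split; eauto. Qed.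

Lemma dinv_ge x y t : X x -> X y -> t <=' trunc -> t <=' dX x y -> t <=' dinv x y.
Proof. intros. apply (dinv_ge_act x y e); auto. rewrite !act_e; auto. Qed.

Lemma dinv_nonneg x y : X x -> X y -> z <=' dinv x y.
Proof. intros. apply dinv_ub, dinv_cand_zero; auto. Qed.

Lemma dinv_self x : X x -> dinv x x = z.
Proof.
  intros hx. apply le_antisym; [|apply dinv_nonneg; auto]. apply dinv_least; auto.
  intros v [_ [g [hg h]]]. rewrite dX_self in h; auto.
Qed.

Lemma dinv_sym x y : X x -> X y -> dinv x y = dinv y x.
Proof.
  intros hx hy. apply le_antisym; apply dinv_least; auto; intros v [hv [g [hg h]]];
    apply (dinv_ge_act _ _ g); auto; rewrite dX_sym; auto.
Qed.

Lemma dinv_triangle x y w : X x -> X y -> X w -> dinv x w <=' dinv x y +' dinv y w.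
Proof.
  intros hx hy hw. apply dinv_least; auto. intros v [hv [g [hg h]]].
  destruct (le_total trunc (dX (act g x) (act g y))) as [h1|h1].
  { eapply le_trans; [exact hv|]. eapply le_trans; [apply (dinv_ge_act x y g); eauto using le_refl|].
    apply le_add_pos, dinv_nonneg; auto. }
  destruct (le_total trunc (dX (act g y) (act g w))) as [h2|h2].
  { eapply le_trans; [exact hv|]. eapply le_trans; [apply (dinv_ge_act y w g); eauto using le_refl|].
    rewrite add_comm. apply le_add_pos, dinv_nonneg; auto. }
  eapply le_trans; [exact h|]. eapply le_trans; [apply (dX_triangle _ (act g y)); auto|].
  apply le_add; apply (dinv_ge_act _ _ g); auto using le_refl.
Qed.

Lemma dinv_act h x y : G h -> X x -> X y -> dinv (act h x) (act h y) = dinv x y.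
Proof.
  intros hh hx hy. apply le_antisym; apply dinv_least; auto; intros v [hv [g [hg h1]]].
  - apply (dinv_ge_act _ _ (mul g h)); auto. rewrite !act_mul; auto.
  - apply (dinv_ge_act _ _ (mul g (inv h))); auto. rewrite !act_mul, !act_inv; auto.
Qed.

Definition spreads_near x a d g := G g /\ forall eta, z <' eta -> exists g', G g' /\ dG g g' <' eta /\
  exists y, X y /\ dX x y <' d /\ a <' dX (act g' x) (act g' y).

Lemma definable_spreads_near x a : X x ->
  definable_rel [1; m] (rel2 (fun w g => exists d, w = [d] /\ z <' d /\ spreads_near x a d g)).
Proof.
  intro hx.
  apply (definable_rel2_by _ _ _ (FAnd (FLt (TC [z]) (TV 0)) (FAnd (FIn G (TV 1))
    (FAll1 (FImp (FLt (TC [z]) (TV 2)) (FEx m (FAnd (FIn G (TV 3))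
    (FEx1 (FAnd (FdG (TV 1) (TV 3) (TV 4))
    (FAnd (FLt (TV 4) (TV 2)) (FEx n (FAnd (FIn X (TV 5))
    (FEx1 (FAnd (FdX (TC x) (TV 5) (TV 6))
    (FAnd (FLt (TV 6) (TV 0))
    (FEx n (FAnd (FAct (TV 3) (TC x) (TV 7))
    (FEx n (FAnd (FAct (TV 3) (TV 5) (TV 8))
    (FEx1 (FAnd (FdX (TV 7) (TV 8) (TV 9))
      (FLt (TC [a]) (TV 9))))))))))))))))))))))).
  { solve_wf; rewrite X_length; auto. }
  intros w g lw lg. destruct (length1 w lw) as [d ->]. simpl. split.
  - intros [hd [hg h]]. exists d. repeat split; auto. intros eta heta.
    apply NNPP; intro hn. apply h. exists eta. intros [a' | b']; [auto|].
    destruct b' as [g' [_ [hg' [r [[_ [_ er]] [hr [y [_ [hy [r2 [[_ [_ er2]] [hr2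
      [a1 [_ [[_ [_ ->]] [b1 [_ [[_ [_ ->]] [r3 [[_ [_ er3]] hr3]]]]]]]]]]]]]]]]]]]].
    injection er as ->. injection er2 as ->. injection er3 as ->.
    apply hn. exists g'. repeat split; auto. exists y. auto.
  - intros [d' [ev [hd [hg h]]]]. injection ev as <-. repeat split; auto.
    intros [eta hn]. apply hn. destruct (classic (z <' eta)) as [he | he]; [right | left; auto].
    destruct (h eta he) as [g' [hg' [hd' [y [hy [hxy ha]]]]]].
    exists g'. repeat split; auto. exists (dG g g'). repeat split; auto.
    exists y. repeat split; auto. exists (dX x y). repeat split; auto.
    exists (act g' x). repeat split; auto. exists (act g' y). repeat split; auto.
    exists (dX (act g' x) (act g' y)). repeat split; auto.
Qed.

(* Otherwise the closed sets [spreads_near x a d], [d > 0], form a filtered family of nonempty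
   sets; a common point [g0] contradicts continuity of the action at [(g0, x)]. *)
Lemma act_equicontinuous x a : X x -> z <' a -> exists del, z <' del /\
  forall g y, G g -> X y -> dX x y <' del -> dX (act g x) (act g y) <=' a.
Proof.
  intros hx ha. apply NNPP; intro hno.
  destruct (definably_compact_scalar_family (fun d => z <' d) (spreads_near x a))
    as [g0 [hg0 h0]].
  - apply (definable_rel1_by _ _ (FLt (TC [z]) (TV 0))); [solve_wf|].
    intros w lw. destruct (length1 w lw) as [d ->]. unfold scalars. simpl. split; eauto.
    intros [d' [ev hd]]. now injection ev as ->.
  - apply definable_spreads_near, hx.
  - intros d g [hg _]; auto.
  - intros d hd. apply NNPP; intro hn. apply hno. exists d. split; auto.
    intros g y hg hy hxy. apply le_not_lt. intro hlt. apply hn. exists g. split; auto.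
    intros eta heta. exists g. rewrite dG_self; auto. repeat split; auto. exists y; auto.
  - intros d hd g hg hn.
    assert (hE : exists eta, z <' eta /\ ~ exists g', G g' /\ dG g g' <' eta /\
        exists y, X y /\ dX x y <' d /\ a <' dX (act g' x) (act g' y)).
    { apply NNPP; intro H. apply hn. split; auto. intros eta heta.
      apply NNPP; intro H'. apply H. eauto. }
    destruct hE as [eta [heta hne]]. destruct (half _ heta) as [b [hb1 hb2]]. exists b. split; auto.
    intros g1 hg1 hd1 [_ h1]. destruct (h1 b hb1) as [g' [hg' [hd' rest]]].
    apply hne. exists g'. split; auto. split; auto.
    eapply le_lt_trans; [apply (dG_triangle g g1 g'); auto|].
    eapply lt_le_trans; [apply lt_add; eauto | auto].
  - intros d1 d2 h1 h2. destruct (le_total d1 d2) as [h|h]; [exists d1 | exists d2]; split; auto;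
      intros g [hg h3]; split; split; auto; intros eta heta;
      destruct (h3 eta heta) as [g' [hg' [hd' [y [hy [hxy ha']]]]]];
      exists g'; repeat split; auto; exists y; repeat split; auto; eapply lt_le_trans; eauto.
  - destruct (half _ ha) as [b [hb1 hb2]].
    destruct (act_cont g0 x b hg0 hx hb1) as [del [hdel hc]].
    destruct (h0 del hdel) as [_ h]. destruct (h del hdel) as [g' [hg' [hd' [y [hy [hxy hfar]]]]]].
    assert (h1 : dX (act g0 x) (act g' x) <' b) by (apply hc; auto; rewrite dX_self; auto).
    assert (h2 : dX (act g0 x) (act g' y) <' b) by (apply hc; auto).
    apply (lt_asym _ _ hfar). eapply le_lt_trans; [apply (dX_triangle _ (act g0 x)); auto|].
    rewrite (dX_sym (act g' x)) by auto. eapply lt_le_trans; [apply lt_add; eauto | auto].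
Qed.

Lemma dinv_cont x eps : X x -> z <' eps ->
  exists del, z <' del /\ forall y, X y -> dX x y <' del -> dinv x y <' eps.
Proof.
  intros hx he. destruct (dense _ _ he) as [a [ha1 ha2]].
  destruct (act_equicontinuous x a hx ha1) as [del [hd h]].
  exists del; split; auto. intros y hy hxy. eapply le_lt_trans; [|exact ha2].
  apply dinv_least; auto. intros v [_ [g [hg hv]]]. eapply le_trans; eauto.
Qed.

(** * The orbit pseudometric *)

Definition dorb_cand x y r := exists g, G g /\ r = dinv x (act g y).
Definition dorb x y := inf_of (dorb_cand x y).
Local Notation Fdorb t1 t2 t3 := (FRel (rel3 (graph2 X X (fun x y => [dorb x y]))) [t1; t2; t3]).

Lemma definable_dorb_cand : definable_rel [n; n; 1] (rel3 (family2 X X dorb_cand)).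
Proof.
  apply (definable_rel3_by _ _ _ _ (FAnd (FIn X (TV 0)) (FAnd (FIn X (TV 1))
    (FEx m (FAnd (FIn G (TV 3)) (FEx n (FAnd (FAct (TV 3) (TV 1) (TV 4))
      (Fdinv (TV 0) (TV 4) (TV 2))))))))).
  { solve_wf. apply definable_dinv. }
  intros x y w _ _ lw. destruct (length1 w lw) as [r ->]. simpl. split.
  - intros [hx [hy [g [_ [hg [b [_ [[_ [_ ->]] [_ [_ er]]]]]]]]]]. injection er as ->.
    repeat split; auto. exists (dinv x (act g y)). split; auto. exists g; auto.
  - intros [hx [hy [r' [ev [g [hg ->]]]]]]. injection ev as ->.
    repeat split; auto. exists g. repeat split; auto. exists (act g y). repeat split; auto.
Qed.

Lemma dorb_inf x y : X x -> X y -> is_inf O (scalars (dorb_cand x y)) (EFin (dorb x y)).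
Proof.
  intros hx hy. unfold dorb, inf_of. apply epsilon_spec, inf_exists.
  - eapply D_scalars_fiber; eauto using definable_dorb_cand.
  - exists (dinv x (act e y)), e. auto.
  - exists z. intros v [g [hg ->]]. apply dinv_nonneg; auto.
Qed.

Lemma dorb_lb x y g : X x -> X y -> G g -> dorb x y <=' dinv x (act g y).
Proof. intros. apply (inf_lb (dorb_cand x y)); [apply dorb_inf | exists g]; auto. Qed.

Lemma dorb_greatest x y b : X x -> X y ->
  (forall g, G g -> b <=' dinv x (act g y)) -> b <=' dorb x y.
Proof.
  intros hx hy h. apply (inf_greatest (dorb_cand x y)); [apply dorb_inf; auto|].
  intros v [g [hg ->]]. auto.
Qed.

Lemma dorb_approx x y w : X x -> X y -> dorb x y <' w ->
  exists g, G g /\ dinv x (act g y) <' w.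
Proof.
  intros hx hy h. destruct (inf_approx _ _ _ (dorb_inf x y hx hy) h) as [v [[g [hg ->]] hv]]. eauto.
Qed.

Lemma definable_dorb : definable_rel [n; n; 1] (rel3 (graph2 X X (fun x y => [dorb x y]))).
Proof. apply (definable_inf_graph _ _ _ _ dorb_cand); auto using definable_dorb_cand, dorb_inf. Qed.

Lemma dorb_nonneg x y : X x -> X y -> z <=' dorb x y.
Proof. intros. apply dorb_greatest; auto. intros. apply dinv_nonneg; auto. Qed.

Lemma dorb_le_dinv x y : X x -> X y -> dorb x y <=' dinv x y.
Proof. intros. rewrite <- (act_e y) at 2; auto. apply dorb_lb; auto. Qed.

Lemma dorb_self x : X x -> dorb x x = z.
Proof.
  intros. apply le_antisym; [|apply dorb_nonneg; auto].
  rewrite <- (dinv_self x); auto. apply dorb_le_dinv; auto.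
Qed.

Lemma dorb_act_l h x y : G h -> X x -> X y -> dorb (act h x) y = dorb x y.
Proof.
  intros hh hx hy. apply le_antisym; apply dorb_greatest; auto; intros g hg.
  - rewrite <- (dinv_act h), <- act_mul by auto. apply dorb_lb; auto.
  - rewrite <- (dinv_act (inv h)), act_inv, <- act_mul by auto. apply dorb_lb; auto.
Qed.

Lemma dorb_sym x y : X x -> X y -> dorb x y = dorb y x.
Proof.
  assert (H : forall x y, X x -> X y -> dorb x y <=' dorb y x).
  { intros x' y' hx hy. apply dorb_greatest; auto. intros g hg.
    rewrite <- (dinv_act (inv g)), act_inv, dinv_sym by auto. apply dorb_lb; auto. }
  intros; apply le_antisym; auto.
Qed.

Lemma dorb_lipschitz x y w : X x -> X y -> X w -> dorb y w <=' dorb x w +' dinv x y.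
Proof.
  intros hx hy hw. apply le_sub_l, dorb_greatest; auto. intros g hg. apply le_sub_l.
  eapply le_trans; [apply (dorb_lb y w g); auto|].
  eapply le_trans; [apply (dinv_triangle y x); auto|].
  rewrite (add_comm (dinv y x)), (dinv_sym y x) by auto. apply le_refl.
Qed.

Lemma dorb_triangle x y w : X x -> X y -> X w -> dorb x w <=' dorb x y +' dorb y w.
Proof.
  intros hx hy hw.
  assert (hstep : forall h, G h -> dorb x w <=' dorb x y +' dinv y (act h w)).
  { intros h hh. apply le_sub_l, dorb_greatest; auto. intros g hg. apply le_sub_l.
    rewrite <- (dinv_act g y), <- act_mul by auto.
    eapply le_trans; [apply (dorb_lb x w (mul g h)); auto|].
    rewrite act_mul by auto. apply dinv_triangle; auto. }
  rewrite add_comm. apply le_sub_l, dorb_greatest; auto. intros h hh.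
  apply le_sub_l. rewrite add_comm. auto.
Qed.

Lemma dX_pos x y : X x -> X y -> x <> y -> z <' dX x y.
Proof.
  intros hx hy hne. destruct (dX_nonneg x y hx hy) as [h|h]; auto.
  exfalso; apply hne, dX_eq0; auto.
Qed.

Lemma definable_translates_within x y : X x -> X y ->
  definable_rel [1; m] (rel2 (fun w g => exists t, w = [t] /\ (z <' t /\ t <=' trunc) /\
    G g /\ dX x (act g y) <=' t)).
Proof.
  intros hx hy.
  apply (definable_rel2_by _ _ _ (FAnd (FLt (TC [z]) (TV 0)) (FAnd (FLe (TV 0) (TC [trunc]))
    (FAnd (FIn G (TV 1)) (FEx n (FAnd (FAct (TV 1) (TC y) (TV 2))
    (FEx1 (FAnd (FdX (TC x) (TV 2) (TV 3))
      (FLe (TV 3) (TV 0)))))))))).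
  { solve_wf; rewrite X_length; auto. }
  intros w g lw lg. destruct (length1 w lw) as [t ->]. simpl. split.
  - intros [h1 [h2 [hg [b [_ [[_ [_ ->]] [r [[_ [_ er]] hr]]]]]]]]. injection er as ->. eauto 7.
  - intros [t' [ev [[h1 h2] [hg h3]]]]. injection ev as <-. repeat split; auto.
    exists (act g y). repeat split; auto. exists (dX x (act g y)). repeat split; auto.
Qed.

Lemma dorb_eq0 x y : X x -> X y -> dorb x y = z -> exists g, G g /\ x = act g y.
Proof.
  intros hx hy hz.
  destruct (definably_compact_scalar_family (fun t => z <' t /\ t <=' trunc)
    (fun t g => G g /\ dX x (act g y) <=' t)) as [g0 [hg0 h0]].
  - apply (definable_rel1_by _ _ (FAnd (FLt (TC [z]) (TV 0)) (FLe (TV 0) (TC [trunc]))));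
      [solve_wf|].
    intros w lw. destruct (length1 w lw) as [t ->]. unfold scalars. simpl. split; eauto.
    intros [t' [ev ht]]. now injection ev as ->.
  - apply definable_translates_within; auto.
  - intros t g [hg _]; auto.
  - intros t [ht1 ht2]. rewrite <- hz in ht1. destruct (dorb_approx x y t hx hy ht1) as [g [hg hd]].
    exists g. split; auto. apply le_not_lt. intro hlt.
    apply (proj1 (le_not_lt t (dinv x (act g y)))); auto. apply dinv_ge; auto using lt_le.
  - intros t [ht1 ht2] g hg hn.
    assert (hlt : t <' dX x (act g y)) by (apply not_le_lt; tauto).
    apply sub_pos in hlt. destruct (act_cont g y _ hg hy hlt) as [del [hdel h]].
    exists del. split; auto. intros g' hg' hd [_ hle].
    specialize (h g' y hg' hy hd). rewrite dX_self in h by auto. specialize (h hdel).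
    apply (lt_irr (dX x (act g y))).
    eapply le_lt_trans; [apply (dX_triangle x (act g' y) (act g y)); auto|].
    rewrite (dX_sym (act g' y)) by auto. eapply lt_le_trans; [apply le_lt_add; eauto|].
    rewrite add_comm, add_Kr. apply le_refl.
  - intros t1 t2 h1 h2. destruct (le_total t1 t2) as [h|h]; [exists t1 | exists t2]; split; auto;
      intros g [hg h3]; repeat split; eauto using le_trans, le_refl.
  - exists g0. split; auto. apply NNPP; intro hne.
    assert (hp : z <' dX x (act g0 y)) by (apply dX_pos; auto).
    destruct (pos_min _ _ hp trunc_pos) as [t [ht1 [ht2 ht3]]].
    destruct (dense _ _ ht1) as [t' [h1 h2]].
    destruct (h0 t') as [_ h3]; [split; auto; apply lt_le, (lt_le_trans _ _ _ h2 ht3)|].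
    apply (proj1 (le_not_lt _ _) h3). eapply lt_le_trans; eauto.
Qed.

(** * The quotient metric *)

(* The order topology on [M], with the open intervals [(a, b)] indexed by [[a; b]]. *)
Definition interval_index (t : list M) := exists a b, t = [a; b] /\ a <' b.
Definition in_interval (t q : list M) := exists a b y, t = [a; b] /\ q = [y] /\ a <' y /\ y <' b.

Lemma D_in_interval :
  D (2 + 1) (fun s => interval_index (firstn 2 s) /\ in_interval (firstn 2 s) (skipn 2 s)).
Proof.
  apply (D_of_definable_rel3 1 1 1 _
    (fun u v w => hd z u <' hd z v /\ hd z u <' hd z w /\ hd z w <' hd z v)).
  - apply (definable_rel3_by _ _ _ _
      (FAnd (FLt (TV 0) (TV 1)) (FAnd (FLt (TV 0) (TV 2)) (FLt (TV 2) (TV 1))))); [solve_wf|].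
    intros; reflexivity.
  - intros u v w lu lv lw.
    destruct (length1 u lu) as [a ->], (length1 v lv) as [b ->], (length1 w lw) as [y ->].
    simpl. split.
    + intros [h1 [h2 h3]]. split; [exists a, b | exists a, b, y]; auto.
    + intros [[a0 [b0 [e0 h0]]] [a' [b' [y' [e1 [e2 h]]]]]].
      injection e0 as <- <-. injection e1 as <- <-. injection e2 as <-. tauto.
  - intros s [_ [a [b [y [e1 [e2 _]]]]]].
    rewrite <- (firstn_skipn 2 s), length_app, e1, e2. reflexivity.
Qed.

Lemma order_top_space : def_top_space D 1 (fun s => length s = 1) 2 interval_index in_interval.
Proof.
  destruct HD as [_ [_ [hfull [_ [_ [_ [_ [_ [_ [_ [hlt _]]]]]]]]]]].
  split; [apply hfull|]. split; [apply hlt|]. split; [apply D_in_interval|].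
  split; [intros t q _ [a [b [y [_ [-> _]]]]]; reflexivity|].
  split.
  - intros q lq. destruct (length1 q lq) as [y ->]. destruct (noend y) as [a [b [h1 h2]]].
    exists [a; b]. split; [exists a, b; split; eauto using lt_trans | exists a, b, y; auto].
  - intros t1 t2 q [a1 [b1 [-> h1]]] [a2 [b2 [-> h2]]] [a1' [b1' [y [e1 [-> [h3 h4]]]]]]
      [a2' [b2' [y' [e2 [e3 [h5 h6]]]]]].
    injection e1 as <- <-. injection e2 as <- <-. injection e3 as <-.
    destruct (le_total a1 a2) as [ha|ha]; destruct (le_total b1 b2) as [hb|hb];
    [exists [a2; b1] | exists [a2; b2] | exists [a1; b1] | exists [a1; b2]];
    (split; [eexists; eexists; split; [reflexivity|]; eapply lt_trans; eauto|]);
    (split; [eexists; eexists; exists y; repeat split; eauto|]);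
    intros q' [a' [b' [y'' [e4 [-> [h7 h8]]]]]]; injection e4 as <- <-;
    split; eexists; eexists; exists y''; repeat split; eauto using le_lt_trans, lt_le_trans.
Qed.

Lemma dorb_cont_l x0 x a b : X x0 -> X x -> a <' dorb x x0 -> dorb x x0 <' b ->
  exists del, z <' del /\ forall y, X y -> dX x y <' del -> a <' dorb y x0 /\ dorb y x0 <' b.
Proof.
  intros hx0 hx ha hb. apply sub_pos in ha, hb.
  destruct (pos_min _ _ ha hb) as [r [hr [hra hrb]]].
  destruct (dinv_cont x r hx hr) as [del [hdel hc]]. exists del. split; auto.
  intros y hy hxy. specialize (hc y hy hxy). split.
  - apply (lt_of_lt_add_sub (dorb x x0)).
    eapply le_lt_trans; [apply (dorb_lipschitz y x x0); auto|]. rewrite dinv_sym by auto.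
    apply le_lt_add; [apply le_refl | eapply lt_le_trans; eauto].
  - eapply le_lt_trans; [apply (dorb_lipschitz x y x0); auto|].
    eapply lt_le_trans; [apply le_lt_add; [apply le_refl | exact hc]|].
    eapply le_trans; [apply le_add_l, hrb|]. rewrite add_sub_cancel. apply le_refl.
Qed.

Lemma pi_eq_orbit x1 x2 : X x1 -> X x2 -> pi x1 = pi x2 -> exists g, G g /\ x1 = act g x2.
Proof.
  intros h1 h2 hp. apply dorb_eq0; auto.
  destruct HQ as [_ [_ [_ [_ [_ [_ U]]]]]].
  destruct (U 1 (fun s => length s = 1) 2 interval_index in_interval (fun x => [dorb x x2]))
    as [psi [_ [_ [_ hpsi]]]].
  - apply order_top_space.
  - apply def_fun_of_definable_graph; auto.
    apply (definable_rel2_by _ _ _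
      (Fdorb (TV 0) (TC x2) (TV 1))).
    + solve_wf. rewrite X_length by auto. apply definable_dorb.
    + intros x w _ _. simpl. tauto.
  - reflexivity.
  - intros x t hx [a [b [-> hab]]] [a' [b' [y [e1 [e2 [h3 h4]]]]]].
    injection e1 as <- <-. injection e2 as <-.
    destruct (dorb_cont_l x2 x a b h2 hx h3 h4) as [del [hdel hc]]. exists del. split; auto.
    intros y' hy' hxy. destruct (hc y' hy' hxy). exists a, b, (dorb y' x2). auto.
  - intros g x hg hx. rewrite dorb_act_l; auto.
  - pose proof (hpsi x1 h1) as a1. pose proof (hpsi x2 h2) as a2.
    rewrite hp, <- a2, dorb_self in a1 by auto. injection a1; auto.
Qed.

Definition rep q := epsilon (inhabits []) (fun x => X x /\ pi x = q).

Lemma rep_spec q : Q q -> X (rep q) /\ pi (rep q) = q.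
Proof. intro hq. unfold rep. apply epsilon_spec, pi_surj, hq. Qed.

Definition dQ q1 q2 := dorb (rep q1) (rep q2).
Local Notation FdQ t1 t2 t3 := (FRel (rel3 (graph2 Q Q (fun q1 q2 => [dQ q1 q2]))) [t1; t2; t3]).

Lemma dorb_fiber x x' y y' : X x -> X x' -> X y -> X y' -> pi x = pi x' -> pi y = pi y' ->
  dorb x y = dorb x' y'.
Proof.
  intros hx hx' hy hy' px py.
  destruct (pi_eq_orbit x x' hx hx' px) as [g [hg ->]].
  destruct (pi_eq_orbit y y' hy hy' py) as [h [hh ->]].
  rewrite dorb_act_l, dorb_sym, dorb_act_l, dorb_sym; auto.
Qed.

Lemma dQ_pi x y : X x -> X y -> dQ (pi x) (pi y) = dorb x y.
Proof.
  intros hx hy. destruct (rep_spec (pi x)) as [h1 h2]; auto.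
  destruct (rep_spec (pi y)) as [h3 h4]; auto. apply dorb_fiber; auto.
Qed.

Lemma dQ_metric : is_metric O Q dQ.
Proof.
  intros q1 q2 q3 h1 h2 h3.
  destruct (rep_spec q1 h1) as [x1 p1], (rep_spec q2 h2) as [x2 p2], (rep_spec q3 h3) as [x3 p3].
  unfold dQ. split; [|split; [|split]].
  - apply dorb_nonneg; auto.
  - split; [|intros <-; apply dorb_self; auto].
    intro hz. destruct (dorb_eq0 _ _ x1 x2 hz) as [g [hg hq]].
    rewrite <- p1, <- p2, hq, pi_act; auto.
  - apply dorb_sym; auto.
  - apply dorb_triangle; auto.
Qed.

Lemma definable_dQ : definable_rel [k; k; 1] (rel3 (graph2 Q Q (fun q1 q2 => [dQ q1 q2]))).
Proof.
  apply (definable_rel3_by _ _ _ _ (FAnd (FIn Q (TV 0)) (FAnd (FIn Q (TV 1))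
    (FEx n (FEx n (FAnd (FPi (TV 3) (TV 0))
    (FAnd (FPi (TV 4) (TV 1))
      (Fdorb (TV 3) (TV 4) (TV 2))))))))).
  { solve_wf. apply definable_dorb. }
  intros q1 q2 w _ _ _. simpl. split.
  - intros [hq1 [hq2 [x [_ [y [_ [[hx ->] [[hy ->] [_ [_ ->]]]]]]]]]]. rewrite dQ_pi; auto.
  - intros [hq1 [hq2 ->]]. destruct (rep_spec q1 hq1) as [x1 p1], (rep_spec q2 hq2) as [x2 p2].
    repeat split; auto. exists (rep q1). split; auto. exists (rep q2). repeat split; auto.
Qed.

Lemma dQ_def_fun2 : def_fun2 D k k 1 Q Q (fun q1 q2 => [dQ q1 q2]).
Proof. apply def_fun2_of_definable_graph; auto using definable_dQ. Qed.

Definition ball_index (t : list M) := exists q eps, t = q ++ [eps] /\ Q q /\ z <' eps.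
Definition in_ball (t q' : list M) := exists q eps, t = q ++ [eps] /\ Q q' /\ dQ q q' <' eps.

Lemma D_ball_index : D (k + 1) ball_index.
Proof.
  apply (D_of_definable_rel2 _ _ _ (fun q w => Q q /\ z <' hd z w)).
  - apply (definable_rel2_by _ _ _ (FAnd (FIn Q (TV 0)) (FLt (TC [z]) (TV 1)))); [solve_wf|].
    intros; reflexivity.
  - intros q w _ lw. destruct (length1 w lw) as [eps ->]. simpl. split.
    + intros [hq he]. exists q, eps. auto.
    + intros [q' [eps' [ev [hq he]]]]. apply app_inj_tail in ev as [<- <-]. auto.
  - intros s [q [eps [-> [hq _]]]]. rewrite length_app, Q_length; auto.
Qed.

Lemma D_in_ball :
  D (k + 1 + k) (fun s => ball_index (firstn (k + 1) s) /\ in_ball (firstn (k + 1) s) (skipn (k + 1) s)).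
Proof.
  apply (D_of_definable_rel3 _ _ _ _
    (fun q w q' => Q q /\ z <' hd z w /\ Q q' /\ dQ q q' <' hd z w)).
  - apply (definable_rel3_by _ _ _ _ (FAnd (FIn Q (TV 0)) (FAnd (FLt (TC [z]) (TV 1))
      (FAnd (FIn Q (TV 2)) (FEx1 (FAnd (FdQ (TV 0) (TV 2) (TV 3)) (FLt (TV 3) (TV 1)))))))).
    { solve_wf. apply definable_dQ. }
    intros q w q' _ _ _. simpl. split.
    + intros [hq [he [hq' [r [[_ [_ er]] hr]]]]]. injection er as ->. auto.
    + intros [hq [he [hq' hd]]]. repeat split; auto. exists (dQ q q'). auto.
  - intros q w q' lq lw lq'. destruct (length1 w lw) as [eps ->]. simpl.
    replace (q ++ eps :: q') with ((q ++ [eps]) ++ q') by (rewrite <- app_assoc; reflexivity).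
    rewrite firstn_app_length, skipn_app_length by (rewrite length_app; simpl; lia).
    split.
    + intros [hq [he [hq' hd]]]. split; exists q, eps; auto.
    + intros [[q0 [eps0 [ev [hq he]]]] [q1 [eps1 [ev1 [hq' hd]]]]].
      apply app_inj_tail in ev as [<- <-]. apply app_inj_tail in ev1 as [<- <-]. auto.
  - intros s [[q [eps [e1 [hq _]]]] [_ [_ [_ [hq' _]]]]].
    rewrite <- (firstn_skipn (k + 1) s), length_app, e1, length_app, (Q_length q), (Q_length _ hq'); auto.
Qed.

Lemma ball_top_space : def_top_space D k Q (k + 1) ball_index in_ball.
Proof.
  split; [apply HQ|]. split; [apply D_ball_index|]. split; [apply D_in_ball|].
  split; [intros t q _ [q0 [eps [_ [hq _]]]]; auto|].
  split.
  - intros q hq. exists (q ++ [trunc]).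
    split; exists q, trunc; [|rewrite (metric_self _ _ dQ_metric)]; auto using trunc_pos.
  - intros t1 t2 q [q1 [e1 [-> [hq1 he1]]]] [q2 [e2 [-> [hq2 he2]]]]
      [q1' [e1' [ev1 [hq hd1]]]] [q2' [e2' [ev2 [_ hd2]]]].
    apply app_inj_tail in ev1 as [<- <-]. apply app_inj_tail in ev2 as [<- <-].
    apply sub_pos in hd1, hd2. destruct (pos_min _ _ hd1 hd2) as [r [hr [hr1 hr2]]].
    exists (q ++ [r]). split; [exists q, r; auto|].
    split; [exists q, r; rewrite (metric_self _ _ dQ_metric); auto|].
    intros q' [q3 [r3 [ev [hq' hd]]]]. apply app_inj_tail in ev as [<- <-].
    split; [exists q1, e1 | exists q2, e2]; repeat split; auto;
      (eapply le_lt_trans; [apply (metric_triangle _ _ dQ_metric _ q); auto|]);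
      (eapply lt_le_trans; [apply le_lt_add; [apply le_refl | exact hd]|]);
      [eapply le_trans; [apply le_add_l, hr1|] | eapply le_trans; [apply le_add_l, hr2|]];
      rewrite add_sub_cancel; apply le_refl.
Qed.

Lemma dX_lt_of_dinv_lt x y r : X x -> X y -> r <=' trunc -> dinv x y <' r -> dX x y <' r.
Proof.
  intros hx hy hr h. apply not_le_lt. intro hle.
  exact (proj1 (le_not_lt r (dinv x y)) (dinv_ge x y r hx hy hr hle) h).
Qed.

Lemma topen_mopen S : (forall q, S q -> Q q) -> topen Q TQ BQ S -> mopen O Q dQ S.
Proof.
  intros hS [_ hop]. split; auto. intros q hq.
  destruct (hop q hq) as [t [ht [hbt hsub]]]. destruct (rep_spec q (hS q hq)) as [hx hpx].
  destruct HQ as [_ [_ [_ [_ [_ [hcont _]]]]]].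
  destruct (hcont (rep q) t hx ht) as [eps [he h]]; [rewrite hpx; auto|].
  destruct (pos_min _ _ he trunc_pos) as [r [hr [hr1 hr2]]]. exists r. split; auto.
  intros q' hq' hd. destruct (rep_spec q' hq') as [hy hpy].
  destruct (dorb_approx _ _ r hx hy hd) as [g [hg hdg]].
  apply hsub. rewrite <- hpy, <- (pi_act g); auto. apply h; auto.
  eapply lt_le_trans; [apply dX_lt_of_dinv_lt|]; eauto.
Qed.

Lemma pi_cont_ball : cont_metric_top O X dX ball_index in_ball pi.
Proof.
  intros x t hx [q0 [eps [-> [hq0 he]]]] [q0' [eps' [ev [hq hd]]]].
  apply app_inj_tail in ev as [<- <-]. apply sub_pos in hd.
  destruct (dinv_cont x _ hx hd) as [del [hdel hc]]. exists del. split; auto.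
  intros y hy hxy. exists q0, eps. repeat split; auto.
  eapply le_lt_trans; [apply (metric_triangle _ _ dQ_metric q0 (pi x)); auto|].
  rewrite dQ_pi by auto. eapply le_lt_trans; [apply le_add_l, dorb_le_dinv; auto|].
  eapply lt_le_trans; [apply le_lt_add; [apply le_refl | apply hc; auto]|].
  rewrite add_sub_cancel. apply le_refl.
Qed.

Lemma mopen_topen S : (forall q, S q -> Q q) -> mopen O Q dQ S -> topen Q TQ BQ S.
Proof.
  intros hS [_ hm]. split; auto.
  destruct HQ as [htop [hpidef [hpiQ [_ [_ [_ U]]]]]].
  destruct (U k Q (k + 1) ball_index in_ball pi ball_top_space hpidef hpiQ pi_cont_ball)
    as [psi [_ [_ [hct hpsi]]]].
  { intros g x hg hx. apply pi_act; auto. }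
  assert (hid : forall q, Q q -> psi q = q).
  { intros q hq. destruct (rep_spec q hq) as [hx hp]. rewrite <- hp at 1 2. symmetry. auto. }
  intros q hq. destruct (hm q hq) as [eps [he hball]].
  destruct (hct q (q ++ [eps])) as [t' [ht' [hb' hsub]]]; auto.
  { exists q, eps. auto. }
  { exists q, eps. rewrite hid by auto. repeat split; auto. rewrite (metric_self _ _ dQ_metric); auto. }
  exists t'. repeat split; auto. intros q' hq'.
  destruct htop as [_ [_ [_ [hBQ _]]]]. assert (Q q') by (eapply hBQ; eauto).
  destruct (hsub q' hq') as [q1 [e1 [ev [_ hd]]]]. apply app_inj_tail in ev as [<- <-].
  rewrite hid in hd by auto. apply hball; auto.
Qed.

Lemma quotient_metric : exists dQ' : list M -> list M -> M,
  definable_metric_space O D k Q dQ' /\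
  (forall S, (forall q, S q -> Q q) -> (topen Q TQ BQ S <-> mopen O Q dQ' S)).
Proof.
  exists dQ. split; [split; [apply HQ | split; [apply dQ_def_fun2 | apply dQ_metric]]|].
  intros S hS. split; [apply topen_mopen | apply mopen_topen]; auto.
Qed.

End QuotientMetric.

Theorem theorem5p10 (M : Type) (O : ogroup M)
  (D : nat -> (list M -> Prop) -> Prop)
  (HO : dense_ordered_group O)
  (HD : is_structure O D)
  (Hlom : locally_o_minimal O D)
  (Hdc : definably_complete O D)
  (m : nat) (G : list M -> Prop) (dG : list M -> list M -> M)
  (mul : list M -> list M -> list M) (inv : list M -> list M) (e : list M)
  (HG : definable_metric_group O D m G dG mul inv e)
  (HGc : definably_compact_metric O D m G dG)
  (n : nat) (X : list M -> Prop) (dX : list M -> list M -> M)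
  (HX : definable_metric_space O D n X dX)
  (act : list M -> list M -> list M)
  (Hact : definable_cont_action O D m G dG mul e n X dX act)
  (k : nat) (Q : list M -> Prop) (l : nat) (TQ : list M -> Prop)
  (BQ : list M -> list M -> Prop) (pi : list M -> list M)
  (HQ : is_definable_quotient O D m G n X dX act k Q l TQ BQ pi) :
  exists dQ : list M -> list M -> M,
    definable_metric_space O D k Q dQ /\
    (forall S : list M -> Prop, (forall q, S q -> Q q) ->
       (topen Q TQ BQ S <-> mopen O Q dQ S)).
Proof.
  eapply quotient_metric; eassumption.
Qed.
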